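(* The set $\mathrm{HI}=\{X\in\mathrm{SB}: X\text{ is hereditarily indecomposable}\}$ is coanalytic.
   Context: $\mathrm{SB}$ is the standard Borel space of closed linear subspaces of $C(\Delta)$ ($\Delta$ the Cantor set) with the Effros–Borel structure. An infinite dimensional Banach space is hereditarily indecomposable if none of its closed subspaces is the direct sum of two infinite dimensional closed subspaces. *)

From Stdlib Require Import Reals.
Open Scope R_scope.

Definition Cantor := nat -> bool.

(** Continuity of f : Delta -> R (product topology; basic opens are cylinders). *)
Definition cont_cantor (f : Cantor -> R) : Prop :=
  forall (x : Cantor) (eps : R), 0 < eps ->
    exists n : nat, forall y : Cantor,
      (forall k, (k < n)%nat -> y k = x k) -> Rabs (f y - f x) < eps.

Definition dist_le (f g : Cantor -> R) (e : R) : Prop :=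
  forall x, Rabs (f x - g x) <= e.

(** A (candidate) subset of C(Delta) is a predicate on functions. *)
Definition fset := (Cantor -> R) -> Prop.

Definition closed_subspace (X : fset) : Prop :=
  (forall f, X f -> cont_cantor f) /\
  X (fun _ => 0) /\
  (forall f g, X f -> X g -> X (fun t => f t + g t)) /\
  (forall (a : R) f, X f -> X (fun t => a * f t)) /\
  (forall f, cont_cantor f ->
     (forall e, 0 < e -> exists g, X g /\ dist_le f g e) -> X f).

Definition SB : fset -> Prop := closed_subspace.

Definition open_CD (U : fset) : Prop :=
  (forall f, U f -> cont_cantor f) /\
  (forall f, U f -> exists e, 0 < e /\
     forall g, cont_cantor g -> dist_le f g e -> U g).

Inductive sigma_gen {T : Type} (G : (T -> Prop) -> Prop) : (T -> Prop) -> Prop :=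
| sg_gen : forall A, G A -> sigma_gen G A
| sg_compl : forall A, sigma_gen G A -> sigma_gen G (fun x => ~ A x)
| sg_cup : forall A : nat -> T -> Prop,
    (forall n, sigma_gen G (A n)) -> sigma_gen G (fun x => exists n, A n x).

Definition effros_gen (A : fset -> Prop) : Prop :=
  exists U, open_CD U /\ forall F, A F <-> exists f, F f /\ U f.

Definition Baire := nat -> nat.
Definition baire_gen (C : Baire -> Prop) : Prop :=
  exists (n : nat) (s : nat -> nat),
    forall y, C y <-> (forall k, (k < n)%nat -> y k = s k).

Definition prod_gen (B : fset * Baire -> Prop) : Prop :=
  exists A C, sigma_gen effros_gen A /\ sigma_gen baire_gen C /\
    forall p, B p <-> (A (fst p) /\ C (snd p)).

Definition analytic_SB (A : fset -> Prop) : Prop :=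
  exists B, sigma_gen prod_gen B /\
    forall X, A X <-> (SB X /\ exists y : Baire, B (X, y)).

Definition coanalytic_SB (A : fset -> Prop) : Prop :=
  (forall X, A X -> SB X) /\ analytic_SB (fun X => SB X /\ ~ A X).

Fixpoint fsum (n : nat) (c : nat -> R) : R :=
  match n with O => 0 | S m => fsum m c + c m end.

Definition lin_indep (n : nat) (v : nat -> Cantor -> R) : Prop :=
  forall c : nat -> R,
    (forall t, fsum n (fun i => c i * v i t) = 0) ->
    forall i, (i < n)%nat -> c i = 0.

Definition infinite_dim (X : fset) : Prop :=
  forall n, exists v : nat -> Cantor -> R,
    (forall i, (i < n)%nat -> X (v i)) /\ lin_indep n v.

Definition decomposable (Y : fset) : Prop :=
  exists Z W, closed_subspace Z /\ closed_subspace W /\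
    infinite_dim Z /\ infinite_dim W /\
    (forall f, Z f -> Y f) /\ (forall f, W f -> Y f) /\
    (forall f, Z f -> W f -> forall t, f t = 0) /\
    (forall y, Y y -> exists z w, Z z /\ W w /\ forall t, y t = z t + w t).

Definition hered_indec (X : fset) : Prop :=
  infinite_dim X /\
  forall Y, closed_subspace Y -> (forall f, Y f -> X f) -> ~ decomposable Y.

Definition HI : fset -> Prop := fun X => SB X /\ hered_indec X.

(* The complement of HI in SB consists of the finite-dimensional spaces and
   of the spaces containing a direct sum Z ⊕ W of two infinite-dimensional
   closed subspaces.  "X contains N independent vectors" is Borel: by
   openness of independence it holds iff X meets N small balls, centred at
   points of a countable dense subset of C(Δ), all of whose selections are
   independent.  A direct sum Z ⊕ W in X is witnessed by a point of N^N
   coding rational-valued step functions that converge geometrically to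
   vectors z_j ∈ Z and w_j ∈ W; Baire category gives a constant K with
   ‖z‖ ≤ K‖z + w‖ on Z ⊕ W, and the code records K, quantitative lower
   bounds making the z_j (resp. w_j) independent, and closeness of the step
   functions to X.  Each condition involves finitely many coordinates of the
   code and X only through Effros generators, so the set of pairs (X, code)
   is Borel.  Conversely, from any such code the closed spans of the limits
   z_j and w_j form, thanks to the bound K, a decomposable subspace of X. *)

From Stdlib Require Import Reals Lra Lia List ZArith ClassicalEpsilon
  FunctionalExtensionality PropExtensionality.
From Stdlib Require Arith.Cantor.
Open Scope R_scope.

Section SigmaAlgebra.

Context {T : Type} (G : (T -> Prop) -> Prop).

Lemma sigma_gen_ext (A B : T -> Prop) :
  sigma_gen G A -> (forall x, A x <-> B x) -> sigma_gen G B.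
Proof.
  intros HA HAB.
  replace B with A; [exact HA|].
  apply functional_extensionality; intro x; apply propositional_extensionality, HAB.
Qed.

Lemma sigma_gen_all (A : nat -> T -> Prop) :
  (forall n, sigma_gen G (A n)) -> sigma_gen G (fun x => forall n, A n x).
Proof.
  intros HA.
  apply sigma_gen_ext with (fun x => ~ exists n, ~ A n x).
  - apply sg_compl, sg_cup; intro n; apply sg_compl, HA.
  - intro x; split.
    + intros Hx n; apply NNPP; intro Hn; apply Hx; exists n; exact Hn.
    + intros Hx [n Hn]; exact (Hn (Hx n)).
Qed.

Lemma sigma_gen_or (A B : T -> Prop) :
  sigma_gen G A -> sigma_gen G B -> sigma_gen G (fun x => A x \/ B x).
Proof.
  intros HA HB.
  apply sigma_gen_ext with (fun x => exists n, (match n with O => A | _ => B end) x).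
  - apply sg_cup; intros [|n]; assumption.
  - intro x; split.
    + intros [[|n] H]; auto.
    + intros [H|H]; [exists O | exists 1%nat]; exact H.
Qed.

Lemma sigma_gen_and (A B : T -> Prop) :
  sigma_gen G A -> sigma_gen G B -> sigma_gen G (fun x => A x /\ B x).
Proof.
  intros HA HB.
  apply sigma_gen_ext with (fun x => ~ (~ A x \/ ~ B x)).
  - apply sg_compl, sigma_gen_or; apply sg_compl; assumption.
  - intro x; tauto.
Qed.

Lemma sigma_gen_impl (A B : T -> Prop) :
  sigma_gen G A -> sigma_gen G B -> sigma_gen G (fun x => A x -> B x).
Proof.
  intros HA HB.
  apply sigma_gen_ext with (fun x => ~ A x \/ B x).
  - apply sigma_gen_or; [apply sg_compl|]; assumption.
  - intro x; tauto.
Qed.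

Hypothesis G_inhabited : exists A, G A.

Lemma sigma_gen_const (P : Prop) : sigma_gen G (fun _ => P).
Proof.
  destruct G_inhabited as [A HA].
  assert (Htop : sigma_gen G (fun x => ~ A x \/ A x))
    by (apply sigma_gen_or; [apply sg_compl|]; apply sg_gen, HA).
  destruct (classic P) as [HP|HP].
  - apply sigma_gen_ext with (1 := Htop); intro x; split; [tauto|].
    intros _; destruct (classic (A x)); tauto.
  - apply sigma_gen_ext with (1 := sg_compl _ _ Htop); intro x; split; [|tauto].
    intros H; destruct (classic (A x)); tauto.
Qed.

End SigmaAlgebra.

(** * Borel sets of N^N and Effros generators *)

Fixpoint decode (j i : nat) : nat :=
  match i with
  | O => fst (Cantor.of_nat j)
  | S i' => decode (snd (Cantor.of_nat j)) i'
  end.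

Lemma decode_prefix_surj (N : nat) (s : nat -> nat) :
  exists j, forall i, (i < N)%nat -> decode j i = s i.
Proof.
  revert s; induction N as [|N IH]; intros s.
  - exists O; intros i Hi; lia.
  - destruct (IH (fun i => s (S i))) as [j Hj].
    exists (Cantor.to_nat (s O, j)); intros [|i] Hi; cbn [decode];
      rewrite Cantor.cancel_of_to; cbn [fst snd]; auto.
    apply Hj; lia.
Qed.

Lemma baire_gen_inhabited : exists C, baire_gen C.
Proof.
  exists (fun _ => True), O, (fun _ => O); intro y; split; auto.
  intros _ k Hk; lia.
Qed.

Lemma baire_borel_of_prefix (P : Baire -> Prop) (n : nat) :
  (forall y y', (forall k, (k < n)%nat -> y k = y' k) -> P y -> P y') ->
  sigma_gen baire_gen P.
Proof.
  intros HP.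
  apply sigma_gen_ext with
    (fun y => exists j, P (decode j) /\ forall k, (k < n)%nat -> y k = decode j k).
  - apply sg_cup; intro j; apply sigma_gen_and.
    + apply sigma_gen_const, baire_gen_inhabited.
    + apply sg_gen; exists n, (decode j); intro y; tauto.
  - intro y; split.
    + intros [j [Hj Hy]]; apply (HP (decode j)); auto.
      intros k Hk; symmetry; auto.
    + intros Hy; destruct (decode_prefix_surj n y) as [j Hj].
      assert (Hyj : forall k, (k < n)%nat -> y k = decode j k)
        by (intros k Hk; symmetry; auto).
      exists j; split; [exact (HP y _ Hyj Hy) | exact Hyj].
Qed.

Lemma baire_borel_of_coords (P : Baire -> Prop) (L : list nat) :
  (forall y y', (forall m, In m L -> y m = y' m) -> P y -> P y') ->
  sigma_gen baire_gen P.
Proof.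
  intros HP; apply (baire_borel_of_prefix P (S (list_max L))).
  intros y y' Hyy'; apply HP; intros m Hm; apply Hyy'.
  pose proof (proj1 (list_max_le L (list_max L)) (le_n _)) as Hmax.
  rewrite Forall_forall in Hmax; specialize (Hmax m Hm); lia.
Qed.

Definition ball (c : Cantor -> R) (r : R) : fset :=
  fun g => cont_cantor g /\ exists r', r' < r /\ dist_le c g r'.

Definition meets (U X : fset) : Prop := exists f, X f /\ U f.

Lemma ball_open (c : Cantor -> R) (r : R) : open_CD (ball c r).
Proof.
  split; [intros f [Hf _]; exact Hf|].
  intros f [_ [r' [Hr' Hcf]]]; exists ((r - r') / 2); split; [lra|].
  intros g Hg Hfg; split; [exact Hg|]; exists ((r + r') / 2); split; [lra|].
  intro x; specialize (Hcf x); specialize (Hfg x).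
  replace (c x - g x) with ((c x - f x) + (f x - g x)) by ring.
  eapply Rle_trans; [apply Rabs_triang | lra].
Qed.

Lemma meets_ball_borel (c : Cantor -> R) (r : R) :
  sigma_gen effros_gen (meets (ball c r)).
Proof. apply sg_gen; exists (ball c r); split; [apply ball_open | intro X; reflexivity]. Qed.

Lemma effros_gen_inhabited : exists A, effros_gen A.
Proof.
  exists (meets (ball (fun _ => 0) 0)), (ball (fun _ => 0) 0).
  split; [apply ball_open | reflexivity].
Qed.

Lemma prod_borel_rect (A : fset -> Prop) (C : Baire -> Prop) :
  sigma_gen effros_gen A -> sigma_gen baire_gen C ->
  sigma_gen prod_gen (fun p => A (fst p) /\ C (snd p)).
Proof. intros HA HC; apply sg_gen; exists A, C; repeat split; tauto. Qed.

Lemma prod_borel_fst (A : fset -> Prop) :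
  sigma_gen effros_gen A -> sigma_gen prod_gen (fun p => A (fst p)).
Proof.
  intros HA; apply sigma_gen_ext with (fun p => A (fst p) /\ True).
  - apply (prod_borel_rect A (fun _ => True)); [exact HA|].
    apply sigma_gen_const, baire_gen_inhabited.
  - tauto.
Qed.

Lemma prod_borel_snd (C : Baire -> Prop) :
  sigma_gen baire_gen C -> sigma_gen prod_gen (fun p => C (snd p)).
Proof.
  intros HC; apply sigma_gen_ext with (fun p => True /\ C (snd p)).
  - apply (prod_borel_rect (fun _ => True) C); [|exact HC].
    apply sigma_gen_const, effros_gen_inhabited.
  - tauto.
Qed.

Definition fzero : Cantor -> R := fun _ => 0.
Definition cantor0 : Cantor := fun _ => false.
Definition fadd (f g : Cantor -> R) : Cantor -> R := fun t => f t + g t.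

Lemma dist_le_nonneg f g e : dist_le f g e -> 0 <= e.
Proof. intros H; specialize (H cantor0); pose proof (Rabs_pos (f cantor0 - g cantor0)); lra. Qed.

Lemma dist_le_refl f : dist_le f f 0.
Proof. intro x; rewrite Rminus_diag, Rabs_R0; lra. Qed.

Lemma dist_le_sym f g e : dist_le f g e -> dist_le g f e.
Proof. intros H x; rewrite Rabs_minus_sym; apply H. Qed.

Lemma dist_le_trans f g h e1 e2 : dist_le f g e1 -> dist_le g h e2 -> dist_le f h (e1 + e2).
Proof.
  intros H1 H2 x; specialize (H1 x); specialize (H2 x).
  replace (f x - h x) with ((f x - g x) + (g x - h x)) by ring.
  eapply Rle_trans; [apply Rabs_triang | lra].
Qed.

Lemma dist_le_weaken f g e1 e2 : dist_le f g e1 -> e1 <= e2 -> dist_le f g e2.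
Proof. intros H He x; specialize (H x); lra. Qed.

Lemma dist_le_fzero f e : dist_le f fzero e <-> forall x, Rabs (f x) <= e.
Proof. unfold dist_le, fzero; split; intros H x; specialize (H x); rewrite Rminus_0_r in *; exact H. Qed.

Lemma dist_le_sub_fzero f g e : dist_le f g e <-> dist_le (fun t => f t - g t) fzero e.
Proof. rewrite dist_le_fzero; reflexivity. Qed.

Lemma dist_le_ext f f' g g' e :
  (forall x, f x = f' x) -> (forall x, g x = g' x) -> dist_le f g e -> dist_le f' g' e.
Proof. intros Hf Hg H x; rewrite <- Hf, <- Hg; apply H. Qed.

Lemma dist_le_add f g f' g' e1 e2 :
  dist_le f f' e1 -> dist_le g g' e2 ->
  dist_le (fun t => f t + g t) (fun t => f' t + g' t) (e1 + e2).
Proof.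
  intros H1 H2 x; specialize (H1 x); specialize (H2 x).
  replace (f x + g x - (f' x + g' x)) with ((f x - f' x) + (g x - g' x)) by ring.
  eapply Rle_trans; [apply Rabs_triang | lra].
Qed.

Lemma dist_le_scale a f g e :
  dist_le f g e -> dist_le (fun t => a * f t) (fun t => a * g t) (Rabs a * e).
Proof.
  intros H x; replace (a * f x - a * g x) with (a * (f x - g x)) by ring.
  rewrite Rabs_mult; apply Rmult_le_compat_l; [apply Rabs_pos | apply H].
Qed.

Lemma cont_const c : cont_cantor (fun _ => c).
Proof. intros x eps He; exists O; intros y _; rewrite Rminus_diag, Rabs_R0; lra. Qed.

Lemma cont_add f g : cont_cantor f -> cont_cantor g -> cont_cantor (fun t => f t + g t).
Proof.
  intros Hf Hg x eps He.
  destruct (Hf x (eps / 2)) as [n1 H1]; [lra|]; destruct (Hg x (eps / 2)) as [n2 H2]; [lra|].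
  exists (n1 + n2)%nat; intros y Hy.
  specialize (H1 y (fun k Hk => Hy k ltac:(lia))); specialize (H2 y (fun k Hk => Hy k ltac:(lia))).
  replace (f y + g y - (f x + g x)) with ((f y - f x) + (g y - g x)) by ring.
  eapply Rle_lt_trans; [apply Rabs_triang | lra].
Qed.

Lemma cont_scale a f : cont_cantor f -> cont_cantor (fun t => a * f t).
Proof.
  intros Hf x eps He; pose proof (Rabs_pos a) as Ha.
  destruct (Hf x (eps / (Rabs a + 1))) as [n H]; [apply Rdiv_lt_0_compat; lra|].
  exists n; intros y Hy; specialize (H y Hy).
  replace (a * f y - a * f x) with (a * (f y - f x)) by ring; rewrite Rabs_mult.
  pose proof (Rabs_pos (f y - f x)).
  apply Rle_lt_trans with ((Rabs a + 1) * Rabs (f y - f x)); [nra|].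
  replace eps with ((Rabs a + 1) * (eps / (Rabs a + 1))) by (field; lra).
  apply Rmult_lt_compat_l; lra.
Qed.

Lemma cont_sub f g : cont_cantor f -> cont_cantor g -> cont_cantor (fun t => f t - g t).
Proof.
  intros Hf Hg; replace (fun t => f t - g t) with (fun t => f t + -1 * g t)
    by (apply functional_extensionality; intro t; ring).
  apply cont_add, cont_scale; assumption.
Qed.

Definition halfpow (k : nat) : R := (/ 2) ^ k.

Lemma halfpow_pos k : 0 < halfpow k.
Proof. apply pow_lt; lra. Qed.

Lemma halfpow_S k : halfpow (S k) = halfpow k / 2.
Proof. unfold halfpow; simpl; field. Qed.

Lemma halfpow_antitone k m : (k <= m)%nat -> halfpow m <= halfpow k.
Proof.
  intros Hkm; induction Hkm as [|m Hkm IH]; [lra|].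
  rewrite halfpow_S; pose proof (halfpow_pos m); lra.
Qed.

Lemma halfpow_small C eps : 0 < eps -> exists k, C * halfpow k < eps.
Proof.
  intros He; destruct (Rle_or_lt C 0) as [HC|HC].
  - exists O; pose proof (halfpow_pos 0); nra.
  - destruct (pow_lt_1_zero (/ 2) ltac:(rewrite Rabs_pos_eq; lra) (eps / C)) as [N HN];
      [apply Rdiv_lt_0_compat; lra|].
    exists N; specialize (HN N (le_n N)); rewrite Rabs_pos_eq in HN by (apply Rlt_le, halfpow_pos).
    apply Rmult_lt_compat_l with (r := C) in HN; [|lra].
    replace (C * (eps / C)) with eps in HN by (field; lra); exact HN.
Qed.

Lemma le_of_halfpow a b C : (forall k, a <= b + C * halfpow k) -> a <= b.
Proof.
  intros H; destruct (Rle_or_lt a b) as [|Hab]; [assumption|].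
  destruct (halfpow_small C (a - b)) as [k Hk]; [lra|]; specialize (H k); lra.
Qed.

Lemma dist_le_of_halfpow f g e C : (forall k, dist_le f g (e + C * halfpow k)) -> dist_le f g e.
Proof. intros H x; apply le_of_halfpow with C; intro k; apply H. Qed.

Lemma geometric_tail (f : nat -> Cantor -> R) c :
  (forall k, dist_le (f k) (f (S k)) (c * halfpow k)) ->
  forall k m, (k <= m)%nat -> dist_le (f k) (f m) (2 * c * (halfpow k - halfpow m)).
Proof.
  intros H k m Hkm; induction Hkm as [|m Hkm IH].
  - apply dist_le_weaken with 0; [apply dist_le_refl | lra].
  - eapply dist_le_weaken; [eapply dist_le_trans; [apply IH | apply H]|].
    rewrite halfpow_S; lra.
Qed.

Lemma Un_cv_dist_le (u : nat -> R) l a b k :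
  Un_cv u l -> (forall m, (k <= m)%nat -> Rabs (u m - a) <= b) -> Rabs (l - a) <= b.
Proof.
  intros Hcv Hb; apply Rnot_lt_le; intro Hlt.
  destruct (Hcv (Rabs (l - a) - b)) as [N HN]; [lra|].
  set (m := Nat.max N k); specialize (HN m ltac:(lia)); specialize (Hb m ltac:(lia)).
  unfold R_dist in HN.
  assert (Rabs (l - a) <= Rabs (u m - l) + Rabs (u m - a)); [|lra].
  replace (l - a) with (- (u m - l) + (u m - a)) by ring.
  rewrite <- (Rabs_Ropp (u m - l)); apply Rabs_triang.
Qed.

Lemma geometric_cauchy_limit (f : nat -> Cantor -> R) c :
  (forall k, dist_le (f k) (f (S k)) (c * halfpow k)) ->
  exists g, (forall k, dist_le g (f k) (2 * c * halfpow k)) /\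
            ((forall k, cont_cantor (f k)) -> cont_cantor g).
Proof.
  intros H; assert (Ht := geometric_tail f c H).
  assert (Hc : 0 <= c).
  { apply Rmult_le_reg_r with (halfpow 0); [apply halfpow_pos|].
    rewrite Rmult_0_l; exact (dist_le_nonneg _ _ _ (H O)). }
  assert (Cau : forall t, Cauchy_crit (fun k => f k t)).
  { intros t eps He; destruct (halfpow_small (2 * c) eps He) as [N HN]; exists N.
    intros n m Hn Hm; unfold R_dist; destruct (Nat.le_ge_cases n m) as [Hnm|Hnm].
    - specialize (Ht n m Hnm t); pose proof (halfpow_pos m); pose proof (halfpow_antitone N n Hn); nra.
    - specialize (Ht m n Hnm t); rewrite Rabs_minus_sym.
      pose proof (halfpow_pos n); pose proof (halfpow_antitone N m Hm); nra. }
  set (g := fun t => proj1_sig (R_complete _ (Cau t))).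
  assert (Hg : forall k, dist_le g (f k) (2 * c * halfpow k)).
  { intros k t; unfold g; destruct (R_complete _ (Cau t)) as [l Hl]; simpl.
    apply Un_cv_dist_le with (u := fun k => f k t) (k := k); [exact Hl|].
    intros m Hm; specialize (Ht k m Hm t); rewrite Rabs_minus_sym.
    pose proof (halfpow_pos m); nra. }
  exists g; split; [exact Hg|].
  intros Hcont x eps He; destruct (halfpow_small (2 * c) (eps / 3)) as [k Hk]; [lra|].
  destruct (Hcont k x (eps / 3)) as [n Hn]; [lra|]; exists n; intros y Hy.
  specialize (Hn y Hy); assert (A := Hg k y); assert (B := Hg k x).
  replace (g y - g x) with ((g y - f k y) + (f k y - f k x) + (f k x - g x)) by ring.
  eapply Rle_lt_trans; [eapply Rle_trans; [apply Rabs_triang | apply Rplus_le_compat_r, Rabs_triang]|].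
  rewrite (Rabs_minus_sym (f k x)); lra.
Qed.

(** * Compactness of Δ and a countable dense subset of C(Δ) *)

Definition agree (n : nat) (x y : Cantor) : Prop := forall k, (k < n)%nat -> x k = y k.

Definition agrees_often (xs : nat -> Cantor) (k : nat) (p : Cantor) : Prop :=
  forall N, exists n, (n >= N)%nat /\ agree k (xs n) p.

(* König's lemma on the binary tree: [cluster_prefix xs k] is a prefix of
   length k shared by infinitely many [xs n]; it extends bit by bit, choosing
   [true] whenever that choice is still shared infinitely often. *)
Fixpoint cluster_prefix (xs : nat -> Cantor) (k : nat) : Cantor :=
  match k with
  | O => fun _ => false
  | S k' =>
      let p := cluster_prefix xs k' in
      fun i => if Nat.eqb i k' then
                 (if excluded_middle_informative
                       (agrees_often xs (S k') (fun j => if Nat.eqb j k' then true else p j))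
                  then true else false)
               else p i
  end.

Lemma cluster_prefix_stable xs k m i :
  (i < k)%nat -> (k <= m)%nat -> cluster_prefix xs m i = cluster_prefix xs k i.
Proof.
  intros Hi Hkm; induction Hkm as [|m Hkm IH]; [reflexivity|].
  rewrite <- IH; simpl; destruct (Nat.eqb_spec i m); [lia | reflexivity].
Qed.

Lemma cluster_prefix_often xs k : agrees_often xs k (cluster_prefix xs k).
Proof.
  induction k as [|k IH].
  - intro N; exists N; split; [lia | intros i Hi; lia].
  - set (pt := fun j => if Nat.eqb j k then true else cluster_prefix xs k j).
    set (pf := fun j => if Nat.eqb j k then false else cluster_prefix xs k j).
    assert (Hor : agrees_often xs (S k) pt \/ agrees_often xs (S k) pf).
    { destruct (classic (agrees_often xs (S k) pt)) as [Hp|Hp]; [left; exact Hp | right].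
      apply not_all_ex_not in Hp; destruct Hp as [N0 HN0].
      intro N; destruct (IH (Nat.max N N0)) as [n [Hn Ha]]; exists n; split; [lia|].
      assert (Hnot : ~ agree (S k) (xs n) pt)
        by (intro Hc; apply HN0; exists n; split; [lia | exact Hc]).
      intros i Hi; unfold pf; destruct (Nat.eqb_spec i k) as [->|Hik]; [|apply Ha; lia].
      destruct (xs n k) eqn:E; [|reflexivity].
      exfalso; apply Hnot; intros j Hj; unfold pt.
      destruct (Nat.eqb_spec j k) as [->|]; [exact E | apply Ha; lia]. }
    assert (E : forall i, (i < S k)%nat -> cluster_prefix xs (S k) i =
              (if excluded_middle_informative (agrees_often xs (S k) pt) then pt else pf) i).
    { intros i Hi; unfold pt, pf; cbn [cluster_prefix].
      destruct (excluded_middle_informative _); destruct (Nat.eqb i k); reflexivity. }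
    intro N; destruct (excluded_middle_informative (agrees_often xs (S k) pt)) as [Hp|Hp].
    + destruct (Hp N) as [n [Hn Ha]]; exists n; split; [exact Hn|].
      intros i Hi; rewrite E by exact Hi; apply Ha, Hi.
    + destruct Hor as [Hq|Hq]; [contradiction|].
      destruct (Hq N) as [n [Hn Ha]]; exists n; split; [exact Hn|].
      intros i Hi; rewrite E by exact Hi; apply Ha, Hi.
Qed.

Lemma Rabs_sub_le a b : Rabs (a - b) <= Rabs a + Rabs b.
Proof. unfold Rminus; rewrite <- (Rabs_Ropp b); apply Rabs_triang. Qed.

Lemma cont_uniform f :
  cont_cantor f -> forall eps, 0 < eps ->
  exists n, forall x y, agree n x y -> Rabs (f x - f y) < eps.
Proof.
  intros Hf eps He; apply NNPP; intro Hn.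
  assert (Hbad : forall n, exists p : Cantor * Cantor,
            agree n (fst p) (snd p) /\ eps <= Rabs (f (fst p) - f (snd p))).
  { intro n; apply NNPP; intro Hc; apply Hn; exists n; intros x y Ha.
    apply Rnot_le_lt; intro Hle; apply Hc; exists (x, y); auto. }
  destruct (choice _ Hbad) as [ps Hps].
  set (xs := fun n => fst (ps n)).
  set (xlim := fun i => cluster_prefix xs (S i) i).
  assert (Hlim : forall k, agree k xlim (cluster_prefix xs k))
    by (intros k i Hi; unfold xlim; symmetry; apply cluster_prefix_stable; lia).
  destruct (Hf xlim (eps / 2)) as [n0 Hn0]; [lra|].
  destruct (cluster_prefix_often xs n0 n0) as [n [Hnn Ha]].
  destruct (Hps n) as [Hagn Hlt].
  assert (A1 : Rabs (f (fst (ps n)) - f xlim) < eps / 2).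
  { apply Hn0; intros k Hk; rewrite (Hlim n0 k Hk); apply (Ha k Hk). }
  assert (A2 : Rabs (f (snd (ps n)) - f xlim) < eps / 2).
  { apply Hn0; intros k Hk; rewrite (Hlim n0 k Hk), <- (Hagn k ltac:(lia)); apply (Ha k Hk). }
  replace (f (fst (ps n)) - f (snd (ps n)))
    with ((f (fst (ps n)) - f xlim) - (f (snd (ps n)) - f xlim)) in Hlt by ring.
  pose proof (Rabs_sub_le (f (fst (ps n)) - f xlim) (f (snd (ps n)) - f xlim)); lra.
Qed.

Definition trunc (n : nat) (x : Cantor) : Cantor := fun i => if Nat.ltb i n then x i else false.

Lemma agree_trunc n x : agree n x (trunc n x).
Proof. intros k Hk; unfold trunc; apply Nat.ltb_lt in Hk; rewrite Hk; reflexivity. Qed.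

Lemma trunc_bounded n (g : Cantor -> R) : exists M, forall x, Rabs (g (trunc n x)) <= M.
Proof.
  revert g; induction n as [|n IH]; intro g.
  - exists (Rabs (g (trunc 0 cantor0))); intro x.
    replace (trunc 0 x) with (trunc 0 cantor0); [lra|].
    apply functional_extensionality; intro i; reflexivity.
  - set (cons := fun (b : bool) (z : Cantor) (i : nat) => match i with O => b | S j => z j end).
    destruct (IH (fun z => g (cons true z))) as [M1 H1].
    destruct (IH (fun z => g (cons false z))) as [M2 H2].
    exists (Rmax M1 M2); intro x.
    replace (trunc (S n) x) with (cons (x O) (trunc n (fun i => x (S i))))
      by (apply functional_extensionality; intros [|i]; reflexivity).
    destruct (x O).
    + eapply Rle_trans; [apply H1 | apply Rmax_l].
    + eapply Rle_trans; [apply H2 | apply Rmax_r].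
Qed.

Lemma cont_bounded_pos f : cont_cantor f -> exists M, 0 < M /\ dist_le f fzero M.
Proof.
  intros Hf; destruct (cont_uniform f Hf 1) as [n Hn]; [lra|].
  destruct (trunc_bounded n f) as [M HM].
  exists (Rabs M + 1); split; [pose proof (Rabs_pos M); lra|].
  apply dist_le_fzero; intro x.
  specialize (Hn x (trunc n x) (agree_trunc n x)); specialize (HM x).
  replace (f x) with ((f x - f (trunc n x)) + f (trunc n x)) by ring.
  eapply Rle_trans; [apply Rabs_triang|]; pose proof (Rle_abs M); lra.
Qed.

Definition rat_enum (k : nat) : R :=
  let (a, bc) := Cantor.of_nat k in
  let (b, c) := Cantor.of_nat bc in (INR a - INR b) / INR (S c).

Lemma IZR_nat_diff (z : Z) : exists a b, IZR z = INR a - INR b.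
Proof.
  destruct (Z_le_gt_dec 0 z) as [H|H].
  - exists (Z.to_nat z), O; rewrite (INR_IZR_INZ (Z.to_nat z)), Z2Nat.id by auto; simpl; ring.
  - exists O, (Z.to_nat (- z)); rewrite (INR_IZR_INZ (Z.to_nat (- z))), Z2Nat.id by lia.
    rewrite opp_IZR; simpl; ring.
Qed.

Lemma rat_enum_dense x eps : 0 < eps -> exists k, Rabs (rat_enum k - x) < eps.
Proof.
  intros He; destruct (INR_archimed 1 (/ eps) ltac:(lra)) as [c Hc]; rewrite Rmult_1_r in Hc.
  assert (HS : 0 < INR (S c)) by (apply lt_0_INR; lia).
  assert (Hlt : / INR (S c) < eps).
  { rewrite <- (Rinv_inv eps); apply Rinv_lt_contravar; [|rewrite S_INR; lra].
    apply Rmult_lt_0_compat; [apply Rinv_0_lt_compat|]; assumption. }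
  destruct (archimed (x * INR (S c))) as [H1 H2].
  set (z := (up (x * INR (S c)) - 1)%Z).
  destruct (IZR_nat_diff z) as [a [b Hab]].
  exists (Cantor.to_nat (a, Cantor.to_nat (b, c))); unfold rat_enum; rewrite !Cantor.cancel_of_to.
  rewrite <- Hab; unfold z; rewrite minus_IZR.
  apply Rle_lt_trans with (/ INR (S c)); [|exact Hlt].
  replace ((IZR (up (x * INR (S c))) - 1) / INR (S c) - x)
    with ((IZR (up (x * INR (S c))) - 1 - x * INR (S c)) * / INR (S c)) by (field; lra).
  rewrite Rabs_mult, (Rabs_pos_eq (/ INR (S c))) by (left; apply Rinv_0_lt_compat; auto).
  assert (Rabs (IZR (up (x * INR (S c))) - 1 - x * INR (S c)) <= 1) by (apply Rabs_le; lra).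
  assert (0 < / INR (S c)) by (apply Rinv_0_lt_compat; auto); nra.
Qed.

Fixpoint prefix_code (m : nat) (t : Cantor) : nat :=
  match m with O => O | S m' => (2 * prefix_code m' t + (if t m' then 1 else 0))%nat end.

Lemma prefix_code_lt m t : (prefix_code m t < 2 ^ m)%nat.
Proof. induction m; simpl; [lia|]; destruct (t m); lia. Qed.

Lemma prefix_code_inj m t t' : prefix_code m t = prefix_code m t' -> agree m t t'.
Proof.
  induction m as [|m IH]; simpl; intros H; [intros k Hk; lia|].
  assert (prefix_code m t = prefix_code m t' /\ t m = t' m) as [H1 H2]
    by (destruct (t m), (t' m); split; auto; lia).
  intros k Hk; destruct (Nat.eq_dec k m) as [->|]; [exact H2 | apply IH; auto; lia].
Qed.

Lemma prefix_code_agree m t t' : agree m t t' -> prefix_code m t = prefix_code m t'.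
Proof.
  induction m as [|m IH]; simpl; intros H; [reflexivity|].
  rewrite IH by (intros k Hk; apply H; lia); rewrite (H m) by lia; reflexivity.
Qed.

(* With j coding the pair (m, s): the function depending only on the first m
   bits, whose value on the prefix numbered p is the rational [rat_enum (decode s p)]. *)
Definition step_fun (j : nat) : Cantor -> R :=
  fun t => rat_enum (decode (snd (Cantor.of_nat j)) (prefix_code (fst (Cantor.of_nat j)) t)).

Lemma step_fun_cont j : cont_cantor (step_fun j).
Proof.
  intros x eps He; exists (fst (Cantor.of_nat j)); intros y Hy; unfold step_fun.
  rewrite (prefix_code_agree _ y x) by (intros k Hk; apply Hy; auto).
  rewrite Rminus_diag, Rabs_R0; lra.
Qed.

Lemma step_fun_dense f eps : cont_cantor f -> 0 < eps -> exists j, dist_le f (step_fun j) eps.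
Proof.
  intros Hf He; destruct (cont_uniform f Hf (eps / 2)) as [m Hm]; [lra|].
  assert (Hrep : forall p : nat, exists t : Cantor,
            (exists t', prefix_code m t' = p) -> prefix_code m t = p).
  { intro p; destruct (classic (exists t', prefix_code m t' = p)) as [[t' Ht']|Hn].
    - exists t'; auto.
    - exists cantor0; intros Hc; contradiction. }
  destruct (choice _ Hrep) as [rep Hrep'].
  assert (Hval : forall p : nat, exists k, Rabs (rat_enum k - f (rep p)) < eps / 2)
    by (intro p; apply rat_enum_dense; lra).
  destruct (choice _ Hval) as [s Hs].
  destruct (decode_prefix_surj (2 ^ m) s) as [j' Hj'].
  exists (Cantor.to_nat (m, j')); intro t; unfold step_fun; rewrite Cantor.cancel_of_to; simpl.
  rewrite Hj' by apply prefix_code_lt.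
  set (p := prefix_code m t).
  assert (Hp : prefix_code m (rep p) = p) by (apply Hrep'; exists t; reflexivity).
  specialize (Hs p); assert (A := Hm t (rep p) (prefix_code_inj _ _ _ (eq_sym Hp))).
  replace (f t - rat_enum (s p)) with ((f t - f (rep p)) - (rat_enum (s p) - f (rep p))) by ring.
  eapply Rle_trans; [apply Rabs_sub_le | lra].
Qed.

Lemma fsum_ext n c d : (forall i, (i < n)%nat -> c i = d i) -> fsum n c = fsum n d.
Proof.
  induction n as [|n IH]; simpl; intros H; [reflexivity|].
  rewrite IH, H; [reflexivity | lia | intros; apply H; lia].
Qed.

Lemma fsum_add n c d : fsum n (fun i => c i + d i) = fsum n c + fsum n d.
Proof. induction n as [|n IH]; simpl; [ring | rewrite IH; ring]. Qed.

Lemma fsum_sub n c d : fsum n (fun i => c i - d i) = fsum n c - fsum n d.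
Proof. induction n as [|n IH]; simpl; [ring | rewrite IH; ring]. Qed.

Lemma fsum_scal n a c : fsum n (fun i => a * c i) = a * fsum n c.
Proof. induction n as [|n IH]; simpl; [ring | rewrite IH; ring]. Qed.

Lemma fsum_zero n : fsum n (fun _ => 0) = 0.
Proof. induction n as [|n IH]; simpl; [reflexivity | rewrite IH; ring]. Qed.

Lemma fsum_const n a : fsum n (fun _ => a) = INR n * a.
Proof. induction n as [|n IH]; simpl fsum; [simpl; ring | rewrite IH, S_INR; ring]. Qed.

Lemma fsum_abs n c : Rabs (fsum n c) <= fsum n (fun i => Rabs (c i)).
Proof.
  induction n as [|n IH]; simpl; [rewrite Rabs_R0; lra|].
  eapply Rle_trans; [apply Rabs_triang | lra].
Qed.

Lemma fsum_le n c d : (forall i, (i < n)%nat -> c i <= d i) -> fsum n c <= fsum n d.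
Proof.
  induction n as [|n IH]; simpl; intros H; [lra|].
  assert (fsum n c <= fsum n d) by (apply IH; intros; apply H; lia).
  assert (c n <= d n) by (apply H; lia); lra.
Qed.

Lemma fsum_nonneg n c : (forall i, (i < n)%nat -> 0 <= c i) -> 0 <= fsum n c.
Proof. intros H; rewrite <- (fsum_zero n); apply fsum_le; exact H. Qed.

Lemma fsum_term_le n c i :
  (forall j, (j < n)%nat -> 0 <= c j) -> (i < n)%nat -> c i <= fsum n c.
Proof.
  induction n as [|n IH]; intros H Hi; simpl; [lia|].
  assert (0 <= fsum n c) by (apply fsum_nonneg; intros; apply H; lia).
  assert (0 <= c n) by (apply H; lia).
  destruct (Nat.eq_dec i n) as [->|Hne]; [lra|].
  assert (c i <= fsum n c) by (apply IH; [intros; apply H | ]; lia); lra.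
Qed.

Lemma fsum_pad n m c :
  (n <= m)%nat -> (forall i, (n <= i)%nat -> c i = 0) -> fsum m c = fsum n c.
Proof.
  intros Hnm Hc; induction Hnm as [|m Hnm IH]; [reflexivity|].
  simpl; rewrite IH, (Hc m) by lia; ring.
Qed.

Definition l1norm (n : nat) (c : nat -> R) : R := fsum n (fun i => Rabs (c i)).

Lemma l1norm_nonneg n c : 0 <= l1norm n c.
Proof. apply fsum_nonneg; intros; apply Rabs_pos. Qed.

Definition lin_comb (n : nat) (c : nat -> R) (v : nat -> Cantor -> R) : Cantor -> R :=
  fun t => fsum n (fun i => c i * v i t).

Lemma lin_comb_add n a b v t :
  lin_comb n (fun i => a i + b i) v t = lin_comb n a v t + lin_comb n b v t.
Proof. unfold lin_comb; rewrite <- fsum_add; apply fsum_ext; intros; ring. Qed.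

Lemma lin_comb_scale n c a v t : lin_comb n (fun i => c * a i) v t = c * lin_comb n a v t.
Proof. unfold lin_comb; rewrite <- fsum_scal; apply fsum_ext; intros; ring. Qed.

Lemma lin_comb_sub n a b v t :
  lin_comb n (fun i => a i - b i) v t = lin_comb n a v t - lin_comb n b v t.
Proof. unfold lin_comb; rewrite <- fsum_sub; apply fsum_ext; intros; ring. Qed.

Lemma lin_comb_coef_perturb n a b v t r :
  (forall i, (i < n)%nat -> Rabs (a i - b i) <= r) ->
  Rabs (lin_comb n a v t - lin_comb n b v t) <= r * fsum n (fun i => Rabs (v i t)).
Proof.
  intros Hab; rewrite <- lin_comb_sub, <- fsum_scal.
  eapply Rle_trans; [apply fsum_abs|]; apply fsum_le; intros i Hi.
  rewrite Rabs_mult; apply Rmult_le_compat_r; [apply Rabs_pos | auto].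
Qed.

Lemma lin_comb_perturb n c v w e :
  (forall i, (i < n)%nat -> dist_le (v i) (w i) e) ->
  dist_le (lin_comb n c v) (lin_comb n c w) (l1norm n c * e).
Proof.
  intros H x; unfold lin_comb, l1norm; rewrite <- fsum_sub, Rmult_comm, <- fsum_scal.
  eapply Rle_trans; [apply fsum_abs|]; apply fsum_le; intros i Hi.
  replace (c i * v i x - c i * w i x) with (c i * (v i x - w i x)) by ring.
  rewrite Rabs_mult, (Rmult_comm e); apply Rmult_le_compat_l; [apply Rabs_pos | apply H, Hi].
Qed.

Definition pad (n : nat) (a : nat -> R) : nat -> R := fun i => if Nat.ltb i n then a i else 0.

Lemma lin_comb_pad n m a v t : (n <= m)%nat -> lin_comb m (pad n a) v t = lin_comb n a v t.
Proof.
  intros H; unfold lin_comb; rewrite (fsum_pad n m); [|exact H|].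
  - apply fsum_ext; intros i Hi; unfold pad; apply Nat.ltb_lt in Hi; rewrite Hi; reflexivity.
  - intros i Hi; unfold pad; destruct (Nat.ltb_spec i n); [lia | ring].
Qed.

Definition unitv (j : nat) : nat -> R := fun i => if Nat.eqb i j then 1 else 0.

Lemma lin_comb_unit j v t : lin_comb (S j) (unitv j) v t = v j t.
Proof.
  unfold lin_comb; simpl; unfold unitv at 2; rewrite Nat.eqb_refl.
  rewrite (fsum_ext j _ (fun _ => 0)), fsum_zero; [ring|].
  intros i Hi; unfold unitv; destruct (Nat.eqb_spec i j); [lia | ring].
Qed.

Section ClosedSubspace.

Variable X : fset.
Hypothesis HX : closed_subspace X.

Lemma subspace_cont f : X f -> cont_cantor f.
Proof. destruct HX as (H & _); apply H. Qed.

Lemma subspace_zero : X fzero.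
Proof. destruct HX as (_ & H & _); exact H. Qed.

Lemma subspace_add f g : X f -> X g -> X (fun t => f t + g t).
Proof. destruct HX as (_ & _ & H & _); apply H. Qed.

Lemma subspace_scale a f : X f -> X (fun t => a * f t).
Proof. destruct HX as (_ & _ & _ & H & _); apply H. Qed.

Lemma subspace_closed f :
  cont_cantor f -> (forall e, 0 < e -> exists g, X g /\ dist_le f g e) -> X f.
Proof. destruct HX as (_ & _ & _ & _ & H); apply H. Qed.

Lemma subspace_ext f g : X f -> (forall t, f t = g t) -> X g.
Proof. intros Hf H; replace g with f; [exact Hf | apply functional_extensionality, H]. Qed.

Lemma subspace_sub f g : X f -> X g -> X (fun t => f t - g t).
Proof.
  intros Hf Hg; apply subspace_ext with (fun t => f t + -1 * g t); [|intros; ring].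
  apply subspace_add; [exact Hf | apply subspace_scale, Hg].
Qed.

Lemma subspace_limit f C :
  cont_cantor f -> (forall k, exists g, X g /\ dist_le f g (C * halfpow k)) -> X f.
Proof.
  intros Hf Happ; apply subspace_closed; [exact Hf|].
  intros e He; destruct (halfpow_small C e He) as [k Hk].
  destruct (Happ k) as [g [Hg Hfg]]; exists g; split; [exact Hg|].
  eapply dist_le_weaken; [exact Hfg | lra].
Qed.

Lemma subspace_geometric_limit (f : nat -> Cantor -> R) c :
  (forall k, X (f k)) -> (forall k, dist_le (f k) (f (S k)) (c * halfpow k)) ->
  exists g, X g /\ forall k, dist_le g (f k) (2 * c * halfpow k).
Proof.
  intros Hf Hcau; destruct (geometric_cauchy_limit f c Hcau) as [g [Hg Hgc]].
  exists g; split; [|exact Hg].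
  apply subspace_limit with (2 * c); [apply Hgc; intro k; apply subspace_cont, Hf|].
  intro k; exists (f k); split; [apply Hf | apply Hg].
Qed.

End ClosedSubspace.

Lemma subspace_lin_comb X n a v :
  closed_subspace X -> (forall i, (i < n)%nat -> X (v i)) -> X (lin_comb n a v).
Proof.
  intros HX; induction n as [|n IH]; intros Hv.
  - apply subspace_ext with fzero; [apply subspace_zero, HX | reflexivity].
  - apply subspace_ext with (fun t => lin_comb n a v t + a n * v n t); [|reflexivity].
    apply (subspace_add X HX); [apply IH; intros; apply Hv; lia | apply subspace_scale, Hv; auto].
Qed.

Definition closed_span (v : nat -> Cantor -> R) : fset :=
  fun f => cont_cantor f /\ forall eps, 0 < eps -> exists n a, dist_le f (lin_comb n a v) eps.

Lemma closed_span_subspace v : closed_subspace (closed_span v).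
Proof.
  split; [|split; [|split; [|split]]].
  - intros f [H _]; exact H.
  - split; [apply cont_const|]; intros eps He; exists O, (fun _ => 0).
    apply dist_le_weaken with 0; [|lra]; intro t; unfold lin_comb; simpl.
    rewrite Rminus_diag, Rabs_R0; lra.
  - intros f g [Hf Hfa] [Hg Hga]; split; [apply cont_add; auto|]; intros eps He.
    destruct (Hfa (eps / 2) ltac:(lra)) as [n1 [a1 H1]].
    destruct (Hga (eps / 2) ltac:(lra)) as [n2 [a2 H2]].
    exists (Nat.max n1 n2), (fun i => pad n1 a1 i + pad n2 a2 i).
    apply (dist_le_ext (fun t => f t + g t) _ (fun t => lin_comb n1 a1 v t + lin_comb n2 a2 v t) _);
      [reflexivity | intro t; rewrite lin_comb_add, !lin_comb_pad by lia; reflexivity|].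
    eapply dist_le_weaken; [apply dist_le_add; eauto | lra].
  - intros c f [Hf Hfa]; split; [apply cont_scale; auto|]; intros eps He.
    pose proof (Rabs_pos c) as Hc.
    destruct (Hfa (eps / (Rabs c + 1))) as [n [a H]]; [apply Rdiv_lt_0_compat; lra|].
    exists n, (fun i => c * a i).
    apply (dist_le_ext (fun t => c * f t) _ (fun t => c * lin_comb n a v t) _);
      [reflexivity | intro t; rewrite lin_comb_scale; reflexivity|].
    eapply dist_le_weaken; [apply dist_le_scale; eauto|].
    apply Rmult_le_reg_r with (Rabs c + 1); [lra|].
    replace (Rabs c * (eps / (Rabs c + 1)) * (Rabs c + 1)) with (Rabs c * eps) by (field; lra); nra.
  - intros f Hf Happ; split; [exact Hf|]; intros eps He.
    destruct (Happ (eps / 2) ltac:(lra)) as [g [[_ Hg] Hfg]].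
    destruct (Hg (eps / 2) ltac:(lra)) as [n [a H]]; exists n, a.
    eapply dist_le_weaken; [eapply dist_le_trans; eauto | lra].
Qed.

Lemma closed_span_gen v j : cont_cantor (v j) -> closed_span v (v j).
Proof.
  intros Hv; split; [exact Hv|]; intros eps He; exists (S j), (unitv j).
  apply dist_le_weaken with 0; [|lra]; intro t.
  rewrite lin_comb_unit, Rminus_diag, Rabs_R0; lra.
Qed.

Lemma closed_span_minimal X v :
  closed_subspace X -> (forall j, X (v j)) -> forall f, closed_span v f -> X f.
Proof.
  intros HX Hv f [Hf Ha]; apply (subspace_closed X HX); [exact Hf|]; intros e He.
  destruct (Ha e He) as [n [a H]]; exists (lin_comb n a v); split; [|exact H].
  apply subspace_lin_comb; auto.
Qed.

(** * Quantitative linear independence *)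

Lemma Rabs_eq_0 x : Rabs x = 0 -> x = 0.
Proof. intros H; destruct (Req_dec x 0) as [|Hx]; [assumption | elim (Rabs_no_R0 x Hx H)]. Qed.

Lemma real_geometric_limit (u : nat -> R) c :
  (forall k, Rabs (u k - u (S k)) <= c * halfpow k) ->
  exists l, forall k, Rabs (l - u k) <= 2 * c * halfpow k.
Proof.
  intros Hu; destruct (geometric_cauchy_limit (fun k _ => u k) c) as [g [Hg _]].
  - intros k x; apply Hu.
  - exists (g cantor0); intro k; apply (Hg k cantor0).
Qed.

Lemma lin_indep_ext n u v :
  (forall i, (i < n)%nat -> u i = v i) -> lin_indep n u -> lin_indep n v.
Proof.
  intros E H c Hc; apply H; intro t; rewrite <- (Hc t).
  apply fsum_ext; intros i Hi; rewrite E; auto.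
Qed.

Lemma lin_indep_prefix n v : lin_indep (S n) v -> lin_indep n v.
Proof.
  intros H c Hc i Hi.
  set (c' := fun j => if Nat.ltb j n then c j else 0).
  assert (E : forall j, (j < n)%nat -> c' j = c j)
    by (intros j Hj; unfold c'; apply Nat.ltb_lt in Hj; rewrite Hj; auto).
  rewrite <- E by auto; apply H; [|lia]; intros t; simpl fsum.
  replace (c' n) with 0 by (unfold c'; rewrite Nat.ltb_irrefl; auto).
  rewrite (fsum_ext n _ (fun i => c i * v i t)), Hc; [ring|].
  intros j Hj; rewrite E; auto.
Qed.

Definition coef_lower_bound (n : nat) (v : nat -> Cantor -> R) (m : R) : Prop :=
  forall c e, dist_le (lin_comb n c v) fzero e -> forall i, (i < n)%nat -> m * Rabs (c i) <= e.

Definition span_dist_ge (n : nat) (v : nat -> Cantor -> R) (d : R) : Prop :=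
  forall c e, dist_le (fun t => v n t - lin_comb n c v t) fzero e -> d <= e.

(* If v_n were a limit of combinations of v_0, ..., v_{n-1}, the lower bound
   would make the coefficients Cauchy, so v_n would be such a combination. *)
Lemma span_dist_pos n v m :
  0 < m -> coef_lower_bound n v m -> lin_indep (S n) v ->
  exists d, 0 < d /\ span_dist_ge n v d.
Proof.
  intros Hm Hlb Hli; apply NNPP; intro Hno.
  assert (Happ : forall k, exists c, dist_le (fun t => v n t - lin_comb n c v t) fzero (halfpow k)).
  { intro k; apply NNPP; intro Hk; apply Hno; exists (halfpow k); split; [apply halfpow_pos|].
    intros c e He; apply Rnot_lt_le; intro Hlt; apply Hk; exists c.
    eapply dist_le_weaken; [exact He | lra]. }
  destruct (choice _ Happ) as [cs Hcs].
  assert (Hstep : forall i k, (i < n)%nat -> Rabs (cs k i - cs (S k) i) <= 2 / m * halfpow k).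
  { intros i k Hi.
    assert (Hdiff : dist_le (lin_comb n (fun i => cs k i - cs (S k) i) v) fzero (2 * halfpow k)).
    { intro t; specialize (Hcs k t) as A; specialize (Hcs (S k) t) as B; unfold fzero in *.
      rewrite lin_comb_sub, Rminus_0_r; rewrite Rminus_0_r in A, B.
      replace (lin_comb n (cs k) v t - lin_comb n (cs (S k)) v t)
        with ((v n t - lin_comb n (cs (S k)) v t) - (v n t - lin_comb n (cs k) v t)) by ring.
      eapply Rle_trans; [apply Rabs_sub_le|]; rewrite halfpow_S in B.
      pose proof (halfpow_pos k); lra. }
    pose proof (Hlb _ _ Hdiff i Hi) as Hmi.
    apply Rmult_le_reg_l with m; [exact Hm|].
    replace (m * (2 / m * halfpow k)) with (2 * halfpow k) by (field; lra); exact Hmi. }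
  assert (Hlim : forall i, exists l, (i < n)%nat -> forall k, Rabs (l - cs k i) <= 4 / m * halfpow k).
  { intro i; destruct (Nat.lt_ge_cases i n) as [Hi|Hi]; [|exists 0; intros; lia].
    destruct (real_geometric_limit (fun k => cs k i) (2 / m)) as [l Hl]; [intro k; auto|].
    exists l; intros _ k; replace (4 / m) with (2 * (2 / m)) by (field; lra); apply Hl. }
  destruct (choice _ Hlim) as [l Hl].
  assert (Hvn : forall t, v n t = lin_comb n l v t).
  { intro t; apply Rminus_diag_uniq, Rabs_eq_0, Rle_antisym; [|apply Rabs_pos].
    apply le_of_halfpow with (1 + 4 / m * fsum n (fun i => Rabs (v i t))); intro k.
    replace (v n t - lin_comb n l v t)
      with ((v n t - lin_comb n (cs k) v t) + (lin_comb n (cs k) v t - lin_comb n l v t)) by ring.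
    eapply Rle_trans; [apply Rabs_triang|].
    assert (A : Rabs (v n t - lin_comb n (cs k) v t) <= halfpow k)
      by (specialize (Hcs k t); unfold fzero in Hcs; rewrite Rminus_0_r in Hcs; exact Hcs).
    assert (B := lin_comb_coef_perturb n (cs k) l v t (4 / m * halfpow k)
                   (fun i Hi => ltac:(rewrite Rabs_minus_sym; apply Hl; exact Hi))).
    lra. }
  set (c := fun i => if Nat.ltb i n then l i else -1).
  assert (Hc : forall t, fsum (S n) (fun i => c i * v i t) = 0).
  { intro t; simpl; unfold c at 2; rewrite Nat.ltb_irrefl.
    rewrite (fsum_ext n _ (fun i => l i * v i t)), (Hvn t); [unfold lin_comb; ring|].
    intros i Hi; unfold c; apply Nat.ltb_lt in Hi; rewrite Hi; reflexivity. }
  specialize (Hli c Hc n (Nat.lt_succ_diag_r n)); unfold c in Hli.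
  rewrite Nat.ltb_irrefl in Hli; lra.
Qed.

Lemma span_dist_last_coef n v d c e :
  0 < d -> span_dist_ge n v d -> dist_le (lin_comb (S n) c v) fzero e -> Rabs (c n) * d <= e.
Proof.
  intros Hd Hspan He; assert (He0 : 0 <= e) by exact (dist_le_nonneg _ _ _ He).
  destruct (Req_dec (c n) 0) as [Z|NZ]; [rewrite Z, Rabs_R0; lra|].
  assert (Hp : 0 < Rabs (c n)) by (apply Rabs_pos_lt; auto).
  assert (H1 : dist_le (fun t => v n t - lin_comb n (fun i => - c i / c n) v t) fzero
                 (e / Rabs (c n))).
  { apply dist_le_fzero; intros x; assert (B := proj1 (dist_le_fzero _ _) He x).
    unfold lin_comb in *; simpl in B.
    replace (v n x - fsum n (fun i => - c i / c n * v i x))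
      with (/ c n * (fsum n (fun i => c i * v i x) + c n * v n x)).
    - rewrite Rabs_mult, Rabs_inv; unfold Rdiv; rewrite Rmult_comm.
      apply Rmult_le_compat_r; [left; apply Rinv_0_lt_compat|]; auto.
    - rewrite (fsum_ext n (fun i => - c i / c n * v i x) (fun i => (- / c n) * (c i * v i x)))
        by (intros; field; auto).
      rewrite fsum_scal; field; auto. }
  specialize (Hspan _ _ H1); apply Rmult_le_compat_l with (r := Rabs (c n)) in Hspan; [|lra].
  replace (Rabs (c n) * (e / Rabs (c n))) with e in Hspan by (field; lra); lra.
Qed.

Lemma coef_lower_bound_S n v m d K :
  0 < m -> 0 < d -> dist_le (v n) fzero K ->
  coef_lower_bound n v m -> span_dist_ge n v d ->
  coef_lower_bound (S n) v (Rmin d (m / (1 + K / d))).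
Proof.
  intros Hm Hd HK Hlb Hspan c e He.
  assert (HK0 : 0 <= K) by exact (dist_le_nonneg _ _ _ HK).
  assert (He0 : 0 <= e) by exact (dist_le_nonneg _ _ _ He).
  assert (HKd : 0 <= K / d) by (apply Rmult_le_pos; [lra | left; apply Rinv_0_lt_compat; lra]).
  assert (Hcn : Rabs (c n) * d <= e) by exact (span_dist_last_coef n v d c e Hd Hspan He).
  assert (Hrest : dist_le (lin_comb n c v) fzero (e + K * (e / d))).
  { apply dist_le_fzero; intros x.
    assert (B := proj1 (dist_le_fzero _ _) He x); assert (C := proj1 (dist_le_fzero _ _) HK x).
    unfold lin_comb in *; simpl in B.
    replace (fsum n (fun i => c i * v i x))
      with ((fsum n (fun i => c i * v i x) + c n * v n x) - c n * v n x) by ring.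
    eapply Rle_trans; [apply Rabs_sub_le|]; rewrite Rabs_mult.
    assert (Rabs (c n) <= e / d)
      by (apply Rmult_le_reg_r with d; auto; unfold Rdiv; rewrite Rmult_assoc, Rinv_l; lra).
    pose proof (Rabs_pos (c n)); pose proof (Rabs_pos (v n x)); nra. }
  intros i Hi; destruct (Nat.eq_dec i n) as [->|Hne].
  - pose proof (Rmin_l d (m / (1 + K / d))); pose proof (Rabs_pos (c n)); nra.
  - assert (A := Hlb c _ Hrest i ltac:(lia)).
    pose proof (Rmin_r d (m / (1 + K / d))); pose proof (Rabs_pos (c i)).
    assert (m / (1 + K / d) * Rabs (c i) <= e).
    { apply Rmult_le_reg_l with (1 + K / d); [lra|].
      replace ((1 + K / d) * (m / (1 + K / d) * Rabs (c i))) with (m * Rabs (c i)) by (field; lra).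
      replace ((1 + K / d) * e) with (e + K * (e / d)) by (field; lra); exact A. }
    nra.
Qed.

Lemma lin_indep_lower_bound n v :
  (forall i, (i < n)%nat -> cont_cantor (v i)) -> lin_indep n v ->
  exists m, 0 < m /\ coef_lower_bound n v m.
Proof.
  induction n as [|n IH]; intros Hv Hli.
  - exists 1; split; [lra | intros c e _ i Hi; lia].
  - destruct (IH (fun i Hi => Hv i ltac:(lia)) (lin_indep_prefix n v Hli)) as [m [Hm Hlb]].
    destruct (span_dist_pos n v m Hm Hlb Hli) as [d [Hd Hspan]].
    destruct (cont_bounded_pos (v n) (Hv n ltac:(lia))) as [K [HK0 HK]].
    exists (Rmin d (m / (1 + K / d))); split.
    + apply Rmin_pos; [exact Hd|]; apply Rdiv_lt_0_compat; [exact Hm|].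
      assert (0 < K / d) by (apply Rdiv_lt_0_compat; auto); lra.
    + apply coef_lower_bound_S; assumption.
Qed.

(* With rho = m / (2 (n + 1)), summing the lower bounds over i < n gives
   m ‖c‖₁ <= n rho ‖c‖₁ <= m ‖c‖₁ / 2. *)
Lemma lin_indep_open n v :
  (forall i, (i < n)%nat -> cont_cantor (v i)) -> lin_indep n v ->
  exists rho, 0 < rho /\
    forall u, (forall i, (i < n)%nat -> dist_le (v i) (u i) rho) -> lin_indep n u.
Proof.
  intros Hv Hli; destruct (lin_indep_lower_bound n v Hv Hli) as [m [Hm Hlb]].
  assert (Hn : 0 <= INR n) by apply pos_INR.
  set (rho := m / (2 * (INR n + 1))).
  exists rho; split; [apply Rdiv_lt_0_compat; lra|]; intros u Hu c Hc.
  assert (Hd : dist_le (lin_comb n c v) fzero (l1norm n c * rho)).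
  { apply dist_le_sym, (dist_le_ext (lin_comb n c u) _ (lin_comb n c v) _);
      [intro x; unfold lin_comb, fzero; rewrite Hc; reflexivity | reflexivity|].
    apply dist_le_sym, lin_comb_perturb; exact Hu. }
  assert (Hsum : m * l1norm n c <= INR n * (l1norm n c * rho)).
  { unfold l1norm; rewrite <- fsum_scal, <- fsum_const; apply fsum_le; exact (Hlb c _ Hd). }
  assert (Hl1 : l1norm n c = 0).
  { pose proof (l1norm_nonneg n c).
    assert (INR n * (l1norm n c * rho) <= l1norm n c * (m / 2)); [|nra].
    replace (INR n * (l1norm n c * rho)) with (l1norm n c * (m / 2) * (INR n / (INR n + 1)))
      by (unfold rho; field; lra).
    assert (INR n / (INR n + 1) <= 1)
      by (apply Rmult_le_reg_r with (INR n + 1); [lra|]; unfold Rdiv; rewrite Rmult_assoc, Rinv_l; lra).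
    assert (0 <= l1norm n c * (m / 2)) by (apply Rmult_le_pos; lra); nra. }
  intros i Hi; apply Rabs_eq_0, Rle_antisym; [|apply Rabs_pos].
  rewrite <- Hl1; apply (fsum_term_le n (fun i => Rabs (c i))); [intros; apply Rabs_pos | exact Hi].
Qed.

Definition contains_indep (N : nat) (X : fset) : Prop :=
  exists v, (forall i, (i < N)%nat -> X (v i)) /\ lin_indep N v.

Definition indep_balls (N s p : nat) : Prop :=
  forall u, (forall i, (i < N)%nat -> ball (step_fun (decode s i)) (halfpow p) (u i)) ->
    lin_indep N u.

Definition meets_indep_balls (N : nat) (X : fset) : Prop :=
  exists s p, indep_balls N s p /\
    forall i, (i < N)%nat -> meets (ball (step_fun (decode s i)) (halfpow p)) X.

Lemma meets_indep_balls_borel N : sigma_gen effros_gen (meets_indep_balls N).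
Proof.
  apply sg_cup; intro s; apply sg_cup; intro p.
  apply sigma_gen_and; [apply sigma_gen_const, effros_gen_inhabited|].
  apply sigma_gen_all; intro i; apply sigma_gen_impl;
    [apply sigma_gen_const, effros_gen_inhabited | apply meets_ball_borel].
Qed.

Lemma meets_indep_balls_iff N X : SB X -> (meets_indep_balls N X <-> contains_indep N X).
Proof.
  intros HX; split.
  - intros [s [p [Hind Hmeet]]].
    assert (Hsel : forall i, exists u, (i < N)%nat ->
                     X u /\ ball (step_fun (decode s i)) (halfpow p) u).
    { intro i; destruct (Nat.lt_ge_cases i N) as [Hi|Hi].
      - destruct (Hmeet i Hi) as [u Hu]; exists u; auto.
      - exists fzero; intros; lia. }
    destruct (choice _ Hsel) as [u Hu]; exists u; split.
    + intros i Hi; apply Hu, Hi.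
    + apply Hind; intros i Hi; apply Hu, Hi.
  - intros [v [HvX Hli]].
    assert (Hcv : forall i, (i < N)%nat -> cont_cantor (v i))
      by (intros i Hi; apply (subspace_cont X HX), HvX, Hi).
    destruct (lin_indep_open N v Hcv Hli) as [rho [Hrho Hopen]].
    destruct (halfpow_small 2 rho Hrho) as [p Hp].
    assert (Hnear : forall i, exists k, (i < N)%nat -> dist_le (v i) (step_fun k) (halfpow p / 2)).
    { intro i; destruct (Nat.lt_ge_cases i N) as [Hi|Hi].
      - destruct (step_fun_dense (v i) (halfpow p / 2) (Hcv i Hi)) as [k Hk];
          [pose proof (halfpow_pos p); lra | exists k; auto].
      - exists O; intros; lia. }
    destruct (choice _ Hnear) as [ks Hks].
    destruct (decode_prefix_surj N ks) as [s Hs].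
    exists s, p; split.
    + intros u Hu; apply Hopen; intros i Hi.
      destruct (Hu i Hi) as [_ [r' [Hr' Hdu]]]; rewrite Hs in Hdu by exact Hi.
      eapply dist_le_weaken; [eapply dist_le_trans; [apply Hks, Hi | exact Hdu]|].
      pose proof (halfpow_pos p); lra.
    + intros i Hi; exists (v i); split; [apply HvX, Hi|].
      split; [apply Hcv, Hi|]; exists (halfpow p / 2); split; [pose proof (halfpow_pos p); lra|].
      rewrite Hs by exact Hi; apply dist_le_sym, Hks, Hi.
Qed.

(** * Baire category and bounded projections onto direct summands *)

Section BaireCategory.

Variables (Y : fset) (C : nat -> fset).
Hypothesis HY : closed_subspace Y.
Hypothesis C_closed :
  forall n y, Y y -> (forall e, 0 < e -> exists c, C n c /\ dist_le y c e) -> C n y.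

Definition ball_inside (n : nat) (y0 : Cantor -> R) (r : R) : Prop :=
  forall y, Y y -> dist_le y y0 r -> C n y.

Lemma shrink_ball n k y0 r :
  (forall y0 r, Y y0 -> 0 < r -> ~ ball_inside n y0 r) -> Y y0 -> 0 < r ->
  exists y1 r1, Y y1 /\ 0 < r1 /\ r1 <= halfpow (S k) /\
    forall z, dist_le z y1 r1 -> dist_le z y0 r /\ ~ C n z.
Proof.
  intros Hnowhere Hy0 Hr.
  assert (Hout : exists y1, Y y1 /\ dist_le y1 y0 (r / 2) /\ ~ C n y1).
  { apply NNPP; intro Hno; apply (Hnowhere y0 (r / 2) Hy0 ltac:(lra)).
    intros y Hy Hd; apply NNPP; intro Hn; apply Hno; exists y; auto. }
  destruct Hout as [y1 [Hy1 [Hd1 Hn1]]].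
  assert (Hgap : exists eps, 0 < eps /\ forall c, C n c -> ~ dist_le y1 c eps).
  { apply NNPP; intro Hno; apply Hn1, C_closed; [exact Hy1|].
    intros e He; apply NNPP; intro He'; apply Hno; exists e; split; [exact He|].
    intros c Hc Hdc; apply He'; exists c; auto. }
  destruct Hgap as [eps [Heps Hgap]].
  set (r1 := Rmin (eps / 2) (Rmin (r / 2) (halfpow (S k)))).
  pose proof (halfpow_pos (S k)).
  assert (Hr1 : r1 <= eps / 2 /\ r1 <= r / 2 /\ r1 <= halfpow (S k)).
  { unfold r1; pose proof (Rmin_l (eps / 2) (Rmin (r / 2) (halfpow (S k)))).
    pose proof (Rmin_r (eps / 2) (Rmin (r / 2) (halfpow (S k)))).
    pose proof (Rmin_l (r / 2) (halfpow (S k))); pose proof (Rmin_r (r / 2) (halfpow (S k))); lra. }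
  exists y1, r1; split; [exact Hy1|]; split.
  { unfold r1; repeat apply Rmin_pos; lra. }
  split; [lra|]; intros z Hz; split.
  - eapply dist_le_weaken; [eapply dist_le_trans; [exact Hz | exact Hd1] | lra].
  - intros Hcz; apply (Hgap z Hcz), dist_le_sym; eapply dist_le_weaken; [exact Hz | lra].
Qed.

Fixpoint nested_balls (F : nat -> (Cantor -> R) * R -> (Cantor -> R) * R) (k : nat)
  : (Cantor -> R) * R :=
  match k with O => (fzero, 1) | S k' => F k' (nested_balls F k') end.

Lemma baire_category :
  (forall y, Y y -> exists n, C n y) ->
  exists n y0 r, Y y0 /\ 0 < r /\ ball_inside n y0 r.
Proof.
  intros Hcov; apply NNPP; intro Hno.
  assert (Hnowhere : forall n y0 r, Y y0 -> 0 < r -> ~ ball_inside n y0 r)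
    by (intros n y0 r Hy0 Hr Hin; apply Hno; exists n, y0, r; auto).
  assert (Hstep : forall k (p : (Cantor -> R) * R), exists p' : (Cantor -> R) * R,
    Y (fst p) /\ 0 < snd p -> Y (fst p') /\ 0 < snd p' /\ snd p' <= halfpow (S k) /\
       forall z, dist_le z (fst p') (snd p') -> dist_le z (fst p) (snd p) /\ ~ C k z).
  { intros k [y r]; destruct (classic (Y y /\ 0 < r)) as [[Hy Hr]|Hn]; [|exists (y, r); tauto].
    destruct (shrink_ball k k y r (Hnowhere k) Hy Hr) as [y1 [r1 H1]].
    exists (y1, r1); intros _; exact H1. }
  destruct (choice (fun k => _) (fun k => choice _ (Hstep k))) as [F HF].
  set (B := nested_balls F).
  assert (Hinv : forall k, Y (fst (B k)) /\ 0 < snd (B k) /\ snd (B k) <= halfpow k).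
  { induction k as [|k [Hy [Hr _]]]; simpl.
    - split; [apply subspace_zero, HY|]; unfold halfpow; simpl; lra.
    - destruct (HF k (B k) (conj Hy Hr)) as (H1 & H2 & H3 & _); auto. }
  assert (Hshrink : forall k z, dist_le z (fst (B (S k))) (snd (B (S k))) ->
                    dist_le z (fst (B k)) (snd (B k)) /\ ~ C k z).
  { intro k; destruct (Hinv k) as [Hy [Hr _]]; apply (HF k (B k) (conj Hy Hr)). }
  assert (Hnest : forall j m z, (j <= m)%nat ->
                  dist_le z (fst (B m)) (snd (B m)) -> dist_le z (fst (B j)) (snd (B j))).
  { intros j m z Hjm; induction Hjm; auto; intros Hz; apply IHHjm, Hshrink, Hz. }
  assert (Hcentre : forall k, dist_le (fst (B k)) (fst (B k)) (snd (B k)))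
    by (intro k; apply dist_le_weaken with 0; [apply dist_le_refl | apply Rlt_le, Hinv]).
  assert (Hcau : forall k, dist_le (fst (B k)) (fst (B (S k))) (1 * halfpow k)).
  { intro k; rewrite Rmult_1_l; apply dist_le_sym.
    eapply dist_le_weaken; [apply (Hnest k (S k)); [lia | apply (Hcentre (S k))] | apply Hinv]. }
  destruct (subspace_geometric_limit Y HY (fun k => fst (B k)) 1 (fun k => proj1 (Hinv k)) Hcau)
    as [g [HgY Hg]].
  destruct (Hcov g HgY) as [n Hn].
  assert (Hgin : dist_le g (fst (B (S n))) (snd (B (S n)))).
  { apply dist_le_of_halfpow with 2; intro m.
    eapply dist_le_weaken.
    - eapply dist_le_trans;
        [apply (Hg (Nat.max m (S n))) | apply (Hnest (S n) (Nat.max m (S n))); [lia | apply Hcentre]].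
    - assert (halfpow (Nat.max m (S n)) <= halfpow m) by (apply halfpow_antitone; lia); lra. }
  exact (proj2 (Hshrink n g Hgin) Hn).
Qed.

End BaireCategory.

Definition angle_bound (Z W : fset) (K : R) : Prop :=
  forall g h e, Z g -> W h -> dist_le (fadd g h) fzero e -> dist_le g fzero (e * K).

Section DirectSum.

Variables Y Z W : fset.
Hypotheses (HY : closed_subspace Y) (HZ : closed_subspace Z) (HW : closed_subspace W).
Hypotheses (HZY : forall f, Z f -> Y f) (HWY : forall f, W f -> Y f).
Hypothesis HZW : forall f, Z f -> W f -> forall t, f t = 0.

Definition approx_split (b : R) (u : Cantor -> R) : Prop :=
  forall eps, 0 < eps -> exists z w, Z z /\ W w /\ dist_le z fzero b /\ dist_le u (fadd z w) eps.

Lemma approx_split_sub b1 b2 u1 u2 :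
  approx_split b1 u1 -> approx_split b2 u2 -> approx_split (b1 + b2) (fun t => u1 t - u2 t).
Proof.
  intros H1 H2 eps Heps.
  destruct (H1 (eps / 2) ltac:(lra)) as [z1 [w1 [Hz1 [Hw1 [Hz1n Hd1]]]]].
  destruct (H2 (eps / 2) ltac:(lra)) as [z2 [w2 [Hz2 [Hw2 [Hz2n Hd2]]]]].
  exists (fun t => z1 t - z2 t), (fun t => w1 t - w2 t).
  split; [apply subspace_sub; auto|]; split; [apply subspace_sub; auto|]; split.
  - intro t; specialize (Hz1n t); specialize (Hz2n t); unfold fzero in *.
    rewrite Rminus_0_r in *; eapply Rle_trans; [apply Rabs_sub_le | lra].
  - intro t; specialize (Hd1 t); specialize (Hd2 t); unfold fadd in *.
    replace (u1 t - u2 t - (z1 t - z2 t + (w1 t - w2 t)))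
      with ((u1 t - (z1 t + w1 t)) - (u2 t - (z2 t + w2 t))) by ring.
    eapply Rle_trans; [apply Rabs_sub_le | lra].
Qed.

Lemma approx_split_scale b u a :
  0 < a -> approx_split b u -> approx_split (a * b) (fun t => a * u t).
Proof.
  intros Ha H eps Heps.
  destruct (H (eps / a)) as [z [w [Hz [Hw [Hzn Hd]]]]]; [apply Rdiv_lt_0_compat; auto|].
  exists (fun t => a * z t), (fun t => a * w t).
  split; [apply subspace_scale; auto|]; split; [apply subspace_scale; auto|]; split.
  - intro t; specialize (Hzn t); unfold fzero in *; rewrite Rminus_0_r in *.
    rewrite Rabs_mult, Rabs_pos_eq by lra; apply Rmult_le_compat_l; lra.
  - intro t; specialize (Hd t); unfold fadd in *.
    replace (a * u t - (a * z t + a * w t)) with (a * (u t - (z t + w t))) by ring.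
    rewrite Rabs_mult, Rabs_pos_eq by lra.
    replace eps with (a * (eps / a)) by (field; lra); apply Rmult_le_compat_l; lra.
Qed.

Lemma approx_split_rescale r b :
  0 < r -> (forall y, Y y -> dist_le y fzero r -> approx_split b y) ->
  forall u e, Y u -> 0 < e -> dist_le u fzero e -> approx_split (b / r * e) u.
Proof.
  intros Hr Hsmall u e Hu He Hue.
  assert (Hscaled : approx_split b (fun t => r / e * u t)).
  { apply Hsmall; [apply subspace_scale; auto|]; intro t.
    specialize (Hue t); unfold fzero in *; rewrite Rminus_0_r in *.
    rewrite Rabs_mult, Rabs_pos_eq by (left; apply Rdiv_lt_0_compat; auto).
    replace r with (r / e * e) at 2 by (field; lra).
    apply Rmult_le_compat_l; [left; apply Rdiv_lt_0_compat|]; auto. }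
  assert (Hback := approx_split_scale _ _ (e / r) ltac:(apply Rdiv_lt_0_compat; auto) Hscaled).
  replace (b / r * e) with (e / r * b) by (field; lra).
  replace u with (fun t => e / r * (r / e * u t)); [exact Hback|].
  apply functional_extensionality; intro t; field; lra.
Qed.

(* Baire category applied to the closed sets {y | approx_split n y} covering Y. *)
Lemma approx_split_uniform :
  (forall y, Y y -> exists z w, Z z /\ W w /\ forall t, y t = z t + w t) ->
  exists M, 0 <= M /\
    forall u e, Y u -> 0 < e -> dist_le u fzero e -> approx_split (M * e) u.
Proof.
  intros Hdec.
  set (C := fun (n : nat) y => Y y /\ approx_split (INR n) y).
  destruct (baire_category Y C HY) as [n [y0 [r [Hy0 [Hr Hball]]]]].
  - intros n y Hy Hc; split; [exact Hy|]; intros eps He.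
    destruct (Hc (eps / 2) ltac:(lra)) as [c [[_ Hcc] Hd]].
    destruct (Hcc (eps / 2) ltac:(lra)) as [z [w [Hz [Hw [Hzn Hd2]]]]].
    exists z, w; repeat split; auto.
    eapply dist_le_weaken; [eapply dist_le_trans; eauto | lra].
  - intros y Hy; destruct (Hdec y Hy) as [z [w [Hz [Hw Hyzw]]]].
    destruct (cont_bounded_pos z (subspace_cont Z HZ z Hz)) as [M [HM HzM]].
    destruct (INR_archimed 1 M ltac:(lra)) as [n Hn]; exists n; split; [exact Hy|].
    intros eps He; exists z, w; repeat split; auto.
    + eapply dist_le_weaken; [exact HzM | lra].
    + apply dist_le_weaken with 0; [|lra]; intro t.
      rewrite Hyzw; unfold fadd; rewrite Rminus_diag, Rabs_R0; lra.
  - assert (Hsmall : forall y, Y y -> dist_le y fzero r -> approx_split (2 * INR n) y).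
    { intros y Hy Hyr.
      assert (Hfar : C n (fadd y0 y)).
      { apply Hball; [unfold fadd; apply subspace_add; auto|]; intro t; unfold fadd.
        replace (y0 t + y t - y0 t) with (y t - fzero t) by (unfold fzero; ring); apply Hyr. }
      assert (Hcentre : C n y0)
        by (apply Hball; [exact Hy0 | apply dist_le_weaken with 0; [apply dist_le_refl | lra]]).
      replace (2 * INR n) with (INR n + INR n) by ring.
      intros eps Heps; destruct (approx_split_sub _ _ _ _ (proj2 Hfar) (proj2 Hcentre) eps Heps)
        as [z [w [Hz [Hw [Hzn Hd]]]]].
      exists z, w; repeat split; auto.
      intro t; specialize (Hd t); unfold fadd in *.
      replace (y t - (z t + w t)) with (y0 t + y t - y0 t - (z t + w t)) by ring; exact Hd. }
    exists (2 * INR n / r); split.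
    { apply Rmult_le_pos; [pose proof (pos_INR n); lra | left; apply Rinv_0_lt_compat; auto]. }
    exact (approx_split_rescale r (2 * INR n) Hr Hsmall).
Qed.

Fixpoint split_residual (y : Cantor -> R)
    (G : nat -> (Cantor -> R) -> (Cantor -> R) * (Cantor -> R)) (k : nat) : Cantor -> R :=
  match k with
  | O => y
  | S k' => let u := split_residual y G k' in fun t => u t - (fst (G k' u) t + snd (G k' u) t)
  end.

Fixpoint split_sum_Z y G k : Cantor -> R :=
  match k with
  | O => fzero
  | S k' => fun t => split_sum_Z y G k' t + fst (G k' (split_residual y G k')) t
  end.

Fixpoint split_sum_W y G k : Cantor -> R :=
  match k with
  | O => fzero
  | S k' => fun t => split_sum_W y G k' t + snd (G k' (split_residual y G k')) t
  end.

Lemma split_sum_residual y G k t :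
  y t = split_sum_Z y G k t + split_sum_W y G k t + split_residual y G k t.
Proof. induction k as [|k IH]; simpl; [unfold fzero; ring | rewrite IH; ring]. Qed.

Lemma approx_split_iterate M y e :
  0 <= M -> (forall u e, Y u -> 0 < e -> dist_le u fzero e -> approx_split (M * e) u) ->
  Y y -> 0 < e -> dist_le y fzero e ->
  exists sZ sW : nat -> Cantor -> R,
    (forall k, Z (sZ k)) /\ (forall k, W (sW k)) /\ sZ O = fzero /\
    (forall k, dist_le (sZ k) (sZ (S k)) (M * e * halfpow k)) /\
    (forall k, dist_le y (fadd (sZ k) (sW k)) (e * halfpow k)).
Proof.
  intros HM Happrox Hy He Hye.
  assert (Hchoice : forall k (u : Cantor -> R), exists p : (Cantor -> R) * (Cantor -> R),
    Y u /\ dist_le u fzero (e * halfpow k) ->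
    Z (fst p) /\ W (snd p) /\ dist_le (fst p) fzero (M * (e * halfpow k)) /\
    dist_le u (fadd (fst p) (snd p)) (e * halfpow (S k))).
  { intros k u; destruct (classic (Y u /\ dist_le u fzero (e * halfpow k))) as [[Hu Hd]|Hn];
      [|exists (fzero, fzero); tauto].
    pose proof (halfpow_pos k); pose proof (halfpow_pos (S k)).
    destruct (Happrox u (e * halfpow k) Hu ltac:(nra) Hd (e * halfpow (S k)) ltac:(nra))
      as [z' [w' H']].
    exists (z', w'); intros _; exact H'. }
  destruct (choice (fun k => _) (fun k => choice _ (Hchoice k))) as [G HG].
  set (res := split_residual y G).
  assert (Hres : forall k, Y (res k) /\ dist_le (res k) fzero (e * halfpow k)).
  { induction k as [|k IH]; simpl.
    - split; [exact Hy|]; unfold halfpow; simpl; rewrite Rmult_1_r; exact Hye.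
    - destruct (HG k (res k) IH) as (HGz & HGw & _ & HGd); split.
      + apply (subspace_sub Y HY (res k) (fadd (fst (G k (res k))) (snd (G k (res k)))));
          [apply IH | unfold fadd; apply subspace_add; auto].
      + apply dist_le_fzero; intro t; exact (HGd t). }
  assert (HGk : forall k, Z (fst (G k (res k))) /\ W (snd (G k (res k))) /\
                 dist_le (fst (G k (res k))) fzero (M * (e * halfpow k)))
    by (intro k; destruct (HG k _ (Hres k)) as (A & B & C & _); auto).
  exists (split_sum_Z y G), (split_sum_W y G); split; [|split; [|split; [|split]]].
  - induction k; simpl; [apply subspace_zero; auto | apply subspace_add; [auto | auto | apply HGk]].
  - induction k; simpl; [apply subspace_zero; auto | apply subspace_add; [auto | auto | apply HGk]].
  - reflexivity.
  - intros k t; cbn [split_sum_Z]; fold res.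
    replace (split_sum_Z y G k t - (split_sum_Z y G k t + fst (G k (res k)) t))
      with (- (fst (G k (res k)) t - fzero t)) by (unfold fzero; ring).
    rewrite Rabs_Ropp; replace (M * e * halfpow k) with (M * (e * halfpow k)) by ring; apply HGk.
  - intros k t; unfold fadd; rewrite (split_sum_residual y G k t) at 1.
    replace (split_sum_Z y G k t + split_sum_W y G k t + split_residual y G k t
             - (split_sum_Z y G k t + split_sum_W y G k t)) with (res k t - fzero t)
      by (unfold res, fzero; ring).
    apply Hres.
Qed.

(* The Z-parts of the iterated splits converge geometrically to some zs, and
   y - zs lies in W, so z = zs because Z ∩ W = 0. *)
Lemma split_bound_of_approx M :
  0 <= M -> (forall u e, Y u -> 0 < e -> dist_le u fzero e -> approx_split (M * e) u) ->
  forall z w e, Z z -> W w -> 0 < e -> dist_le (fadd z w) fzero e ->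
    dist_le z fzero (2 * M * e).
Proof.
  intros HM Happrox z w e Hz Hw He Hzw.
  set (y := fadd z w); assert (Hy : Y y) by (unfold y, fadd; apply subspace_add; auto).
  destruct (approx_split_iterate M y e HM Happrox Hy He Hzw)
    as (sZ & sW & HsZ & HsW & H0 & Hcau & Hclose).
  destruct (subspace_geometric_limit Z HZ sZ (M * e) HsZ Hcau) as [zs [HzsZ Hzs]].
  assert (HwsW : W (fun t => y t - zs t)).
  { apply (subspace_limit W HW _ (2 * M * e + e)).
    - apply cont_sub; [apply (subspace_cont Y HY), Hy | apply (subspace_cont Z HZ), HzsZ].
    - intro k; exists (sW k); split; [apply HsW|]; intro t.
      specialize (Hclose k t); specialize (Hzs k t); unfold fadd in Hclose.
      replace (y t - zs t - sW k t) with ((y t - (sZ k t + sW k t)) - (zs t - sZ k t)) by ring.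
      eapply Rle_trans; [apply Rabs_sub_le|]; pose proof (halfpow_pos k); nra. }
  assert (Hz_eq : forall t, z t - zs t = 0).
  { apply HZW; [apply subspace_sub; auto|].
    apply subspace_ext with (fun t => (y t - zs t) - w t); [apply subspace_sub; auto|].
    intro t; unfold y, fadd; ring. }
  intro t; specialize (Hz_eq t); specialize (Hzs O t); rewrite H0 in Hzs.
  unfold fzero, halfpow in *; simpl in Hzs.
  replace (z t - 0) with (zs t - 0) by lra; lra.
Qed.

End DirectSum.

Lemma direct_sum_angle_bound (Y Z W : fset) :
  closed_subspace Y -> closed_subspace Z -> closed_subspace W ->
  (forall f, Z f -> Y f) -> (forall f, W f -> Y f) -> (forall f, Z f -> W f -> forall t, f t = 0) ->
  (forall y, Y y -> exists z w, Z z /\ W w /\ forall t, y t = z t + w t) ->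
  exists K, 0 <= K /\ angle_bound Z W K.
Proof.
  intros HY HZ HW HZY HWY HZW Hdec.
  destruct (approx_split_uniform Y Z W HY HZ HW Hdec) as [M [HM Happrox]].
  assert (Hbound := split_bound_of_approx Y Z W HY HZ HW HZY HWY HZW M HM Happrox).
  exists (2 * M + 1); split; [lra|].
  intros z w e Hz Hw Hd; assert (He0 : 0 <= e) by exact (dist_le_nonneg _ _ _ Hd).
  apply dist_le_of_halfpow with (2 * M + 1); intro k; pose proof (halfpow_pos k).
  eapply dist_le_weaken.
  - apply (Hbound z w (e + halfpow k)); [auto | auto | lra|].
    eapply dist_le_weaken; [exact Hd | lra].
  - nra.
Qed.

Definition sum_space (Z W : fset) : fset :=
  fun f => exists g h, Z g /\ W h /\ forall t, f t = g t + h t.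

Lemma angle_bound_closed_span (z w : nat -> Cantor -> R) K :
  0 <= K ->
  (forall n a b e, dist_le (fadd (lin_comb n a z) (lin_comb n b w)) fzero e ->
     dist_le (lin_comb n a z) fzero (e * K)) ->
  angle_bound (closed_span z) (closed_span w) K.
Proof.
  intros HK Hang g h e [_ Hga] [_ Hha] Hd.
  apply dist_le_of_halfpow with (2 * K + 1); intro k; pose proof (halfpow_pos k).
  destruct (Hga (halfpow k) (halfpow_pos k)) as [n1 [a1 H1]].
  destruct (Hha (halfpow k) (halfpow_pos k)) as [n2 [a2 H2]].
  set (n := Nat.max n1 n2).
  assert (Hcomb : dist_le (fadd (lin_comb n (pad n1 a1) z) (lin_comb n (pad n2 a2) w)) fzero
                    (e + 2 * halfpow k)).
  { intro t; specialize (H1 t); specialize (H2 t); specialize (Hd t); unfold fadd, fzero in *.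
    rewrite !lin_comb_pad by lia.
    replace (lin_comb n1 a1 z t + lin_comb n2 a2 w t - 0)
      with ((g t + h t - 0) - (g t - lin_comb n1 a1 z t) - (h t - lin_comb n2 a2 w t)) by ring.
    eapply Rle_trans; [apply Rabs_sub_le|].
    eapply Rle_trans; [apply Rplus_le_compat_r, Rabs_sub_le | lra]. }
  intro t; specialize (Hang _ _ _ _ Hcomb t); specialize (H1 t); unfold fzero in *.
  rewrite lin_comb_pad in Hang by lia.
  replace (g t - 0) with ((g t - lin_comb n1 a1 z t) + (lin_comb n1 a1 z t - 0)) by ring.
  eapply Rle_trans; [apply Rabs_triang | nra].
Qed.

Lemma angle_bound_inter Z W K f t :
  closed_subspace W -> angle_bound Z W K -> Z f -> W f -> f t = 0.
Proof.
  intros HW Hang HfZ HfW.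
  assert (Hsum : dist_le (fadd f (fun t => -1 * f t)) fzero 0).
  { intro s; unfold fadd, fzero; replace (f s + -1 * f s - 0) with 0 by ring.
    rewrite Rabs_R0; lra. }
  specialize (Hang _ _ _ HfZ (subspace_scale W HW _ _ HfW) Hsum t).
  rewrite Rmult_0_l in Hang; unfold fzero in Hang; rewrite Rminus_0_r in Hang.
  apply Rabs_eq_0, Rle_antisym; [exact Hang | apply Rabs_pos].
Qed.

(* The bound makes the Z-components of approximating sums Cauchy. *)
Lemma sum_space_closed Z W K f :
  closed_subspace Z -> closed_subspace W -> angle_bound Z W K -> cont_cantor f ->
  (forall e, 0 < e -> exists g, sum_space Z W g /\ dist_le f g e) -> sum_space Z W f.
Proof.
  intros HZ HW Hang Hf Happ.
  assert (Hk : forall k, exists p : (Cantor -> R) * (Cantor -> R),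
            Z (fst p) /\ W (snd p) /\ dist_le f (fadd (fst p) (snd p)) (halfpow (S k))).
  { intro k; destruct (Happ (halfpow (S k)) (halfpow_pos (S k))) as [y [[g [h [Hg [Hh E]]]] Hd]].
    exists (g, h); split; [exact Hg|]; split; [exact Hh|].
    apply (dist_le_ext f _ y _); auto. }
  destruct (choice _ Hk) as [ps Hps].
  assert (Hcau : forall k, dist_le (fst (ps k)) (fst (ps (S k))) (K * halfpow k)).
  { intro k; destruct (Hps k) as [A1 [B1 C1]]; destruct (Hps (S k)) as [A2 [B2 C2]].
    apply dist_le_sub_fzero; rewrite Rmult_comm.
    apply (Hang (fun t => fst (ps k) t - fst (ps (S k)) t) (fun t => snd (ps k) t - snd (ps (S k)) t));
      [apply subspace_sub; auto | apply subspace_sub; auto|].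
    intro t; specialize (C1 t); specialize (C2 t); unfold fadd, fzero in *.
    replace (fst (ps k) t - fst (ps (S k)) t + (snd (ps k) t - snd (ps (S k)) t) - 0)
      with ((f t - (fst (ps (S k)) t + snd (ps (S k)) t)) - (f t - (fst (ps k) t + snd (ps k) t)))
      by ring.
    eapply Rle_trans; [apply Rabs_sub_le|]; rewrite !halfpow_S in *.
    pose proof (halfpow_pos k); lra. }
  destruct (subspace_geometric_limit Z HZ (fun k => fst (ps k)) K (fun k => proj1 (Hps k)) Hcau)
    as [gs [HgsZ Hgs]].
  exists gs, (fun t => f t - gs t); split; [exact HgsZ|]; split; [|intros; ring].
  apply (subspace_limit W HW _ (2 * K + 1)).
  + apply cont_sub; [exact Hf | apply (subspace_cont Z HZ), HgsZ].
  + intro k; exists (snd (ps k)); split; [apply Hps|]; intro t.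
    destruct (Hps k) as [_ [_ C1]]; specialize (C1 t); specialize (Hgs k t); unfold fadd in C1.
    replace (f t - gs t - snd (ps k) t)
      with ((f t - (fst (ps k) t + snd (ps k) t)) - (gs t - fst (ps k) t)) by ring.
    eapply Rle_trans; [apply Rabs_sub_le|]; rewrite halfpow_S in C1.
    pose proof (halfpow_pos k); nra.
Qed.

Lemma sum_space_subspace Z W K :
  closed_subspace Z -> closed_subspace W -> angle_bound Z W K ->
  closed_subspace (sum_space Z W).
Proof.
  intros HZ HW Hang; split; [|split; [|split; [|split]]].
  - intros f [g [h [Hg [Hh E]]]].
    replace f with (fun t => g t + h t) by (apply functional_extensionality; intro; auto).
    apply cont_add; [apply (subspace_cont Z HZ) | apply (subspace_cont W HW)]; auto.
  - exists fzero, fzero; split; [apply subspace_zero; auto|].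
    split; [apply subspace_zero; auto | intros; unfold fzero; ring].
  - intros f1 f2 [g1 [h1 [Hg1 [Hh1 E1]]]] [g2 [h2 [Hg2 [Hh2 E2]]]].
    exists (fun t => g1 t + g2 t), (fun t => h1 t + h2 t).
    split; [apply subspace_add; auto|]; split; [apply subspace_add; auto|].
    intro t; rewrite E1, E2; ring.
  - intros c f [g [h [Hg [Hh E]]]]; exists (fun t => c * g t), (fun t => c * h t).
    split; [apply subspace_scale; auto|]; split; [apply subspace_scale; auto|].
    intro t; rewrite E; ring.
  - intro f; apply (sum_space_closed Z W K f HZ HW Hang).
Qed.

Definition block_index (n i : nat) : nat := Cantor.to_nat (n, i).

(* Infinite dimensionality only provides, for each n, n independent vectors;
   the n-th block z (block_index n i), i < n, holds such a family. *)
Lemma not_hered_indec_of_blocks (X : fset) (z w : nat -> Cantor -> R) (K : R) :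
  SB X -> 0 <= K -> (forall j, X (z j)) -> (forall j, X (w j)) ->
  (forall n, lin_indep n (fun i => z (block_index n i))) ->
  (forall n, lin_indep n (fun i => w (block_index n i))) ->
  (forall n a b e, dist_le (fadd (lin_comb n a z) (lin_comb n b w)) fzero e ->
     dist_le (lin_comb n a z) fzero (e * K)) ->
  ~ hered_indec X.
Proof.
  intros HX HK Hz Hw Hlz Hlw Hang [_ Hhi].
  assert (Hzc : forall j, cont_cantor (z j)) by (intro j; apply (subspace_cont X HX), Hz).
  assert (Hwc : forall j, cont_cantor (w j)) by (intro j; apply (subspace_cont X HX), Hw).
  set (Z := closed_span z); set (W := closed_span w).
  assert (HZ : closed_subspace Z) by (apply closed_span_subspace; auto).
  assert (HW : closed_subspace W) by (apply closed_span_subspace; auto).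
  assert (HZW : angle_bound Z W K) by (apply angle_bound_closed_span; auto).
  apply (Hhi (sum_space Z W) (sum_space_subspace Z W K HZ HW HZW)).
  - intros f [g [h [Hg [Hh E]]]]; apply subspace_ext with (fun t => g t + h t); [|intros; auto].
    apply (subspace_add X HX);
      [apply (closed_span_minimal X z HX Hz g Hg) | apply (closed_span_minimal X w HX Hw h Hh)].
  - exists Z, W; split; [exact HZ|]; split; [exact HW|].
    split; [|split; [|split; [|split; [|split]]]].
    + intro n; exists (fun i => z (block_index n i)).
      split; [intros i Hi; apply closed_span_gen; auto | auto].
    + intro n; exists (fun i => w (block_index n i)).
      split; [intros i Hi; apply closed_span_gen; auto | auto].
    + intros f Hf; exists f, fzero; split; [exact Hf|].
      split; [apply subspace_zero; auto | intros; unfold fzero; ring].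
    + intros f Hf; exists fzero, f; split; [apply subspace_zero; auto|].
      split; [exact Hf | intros; unfold fzero; ring].
    + intros f HfZ HfW t; exact (angle_bound_inter Z W K f t HW HZW HfZ HfW).
    + intros y Hy; exact Hy.
Qed.

(** * Codes for decomposable subspaces *)

(* A code [y] lists, for each side [tag] (0 for Z, 1 for W), each index [j]
   and each precision [k], a step function [code_seq y tag k j] within
   2^(1-k) of the j-th vector of that side. *)
Definition code_index (tag j k : nat) : nat := Cantor.to_nat (Cantor.to_nat (tag, j), k).

Definition code_seq (y : Baire) (tag k : nat) : nat -> Cantor -> R :=
  fun j => step_fun (y (code_index tag j k)).

Definition code_cauchy (y : Baire) : Prop :=
  forall tag j k, dist_le (code_seq y tag k j) (code_seq y tag (S k) j) (halfpow k).

Definition code_near (X : fset) (y : Baire) : Prop :=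
  forall tag j k, meets (ball (code_seq y tag k j) (3 * halfpow k)) X.

Definition code_indep (y : Baire) (tag : nat) : Prop :=
  forall n, exists q : nat, forall k c e,
    dist_le (lin_comb n c (fun i => code_seq y tag k (block_index n i))) fzero e ->
    forall i, (i < n)%nat -> Rabs (c i) / (INR q + 1) <= e + l1norm n c * (2 * halfpow k).

Definition code_angle (p : nat) (y : Baire) : Prop :=
  forall n k a b e,
    dist_le (fadd (lin_comb n a (code_seq y 0 k)) (lin_comb n b (code_seq y 1 k))) fzero e ->
    dist_le (lin_comb n a (code_seq y 0 k)) fzero
      ((e + (l1norm n a + l1norm n b) * (2 * halfpow k)) * (INR p + 1)
       + l1norm n a * (2 * halfpow k)).

Definition code_decomp (p : nat) (X : fset) (y : Baire) : Prop :=
  code_cauchy y /\ code_near X y /\ code_indep y 0 /\ code_indep y 1 /\ code_angle p y.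

Definition code_approx (y : Baire) (tag : nat) (v : nat -> Cantor -> R) : Prop :=
  forall j k, dist_le (v j) (code_seq y tag k j) (2 * halfpow k).

Lemma lin_comb_code_approx y tag v n c g k :
  code_approx y tag v ->
  dist_le (lin_comb n c (fun i => v (g i))) (lin_comb n c (fun i => code_seq y tag k (g i)))
    (l1norm n c * (2 * halfpow k)).
Proof. intros Hv; apply lin_comb_perturb; intros i _; apply Hv. Qed.

Definition code_indices (tag : nat) (g : nat -> nat) (n k : nat) : list nat :=
  map (fun i => code_index tag (g i) k) (seq 0 n).

Lemma lin_comb_code_seq_ext n c tag g k (y y' : Baire) :
  (forall m, In m (code_indices tag g n k) -> y m = y' m) ->
  lin_comb n c (fun i => code_seq y tag k (g i)) = lin_comb n c (fun i => code_seq y' tag k (g i)).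
Proof.
  intros H; apply functional_extensionality; intro t; unfold lin_comb.
  apply fsum_ext; intros i Hi; unfold code_seq; rewrite H; [reflexivity|].
  apply (in_map (fun i => code_index tag (g i) k)), in_seq; lia.
Qed.

Lemma code_cauchy_borel : sigma_gen baire_gen code_cauchy.
Proof.
  apply sigma_gen_all; intro tag; apply sigma_gen_all; intro j; apply sigma_gen_all; intro k.
  apply baire_borel_of_coords with (L := code_index tag j k :: code_index tag j (S k) :: nil).
  intros y y' H; unfold code_seq.
  rewrite (H (code_index tag j k)), (H (code_index tag j (S k))); simpl; auto.
Qed.

Lemma code_near_borel : sigma_gen prod_gen (fun q => code_near (fst q) (snd q)).
Proof.
  apply sigma_gen_ext with (fun q => forall tag j k, exists m,
    meets (ball (step_fun m) (3 * halfpow k)) (fst q) /\ snd q (code_index tag j k) = m).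
  - apply sigma_gen_all; intro tag; apply sigma_gen_all; intro j; apply sigma_gen_all; intro k.
    apply sg_cup; intro m.
    apply (prod_borel_rect (meets (ball (step_fun m) (3 * halfpow k)))
                           (fun y => y (code_index tag j k) = m)); [apply meets_ball_borel|].
    apply baire_borel_of_coords with (L := code_index tag j k :: nil).
    intros y y' H; rewrite (H (code_index tag j k)); simpl; auto.
  - intros [X y]; unfold code_near, code_seq; simpl; split.
    + intros H tag j k; destruct (H tag j k) as [m [Hm E]]; rewrite E; exact Hm.
    + intros H tag j k; exists (y (code_index tag j k)); auto.
Qed.

Lemma code_indep_borel tag : sigma_gen baire_gen (fun y => code_indep y tag).
Proof.
  apply sigma_gen_all; intro n; apply sg_cup; intro q; apply sigma_gen_all; intro k.
  apply baire_borel_of_coords with (L := code_indices tag (block_index n) n k).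
  intros y y' H Hy c e; rewrite <- (lin_comb_code_seq_ext n c tag (block_index n) k y y' H); apply Hy.
Qed.

Lemma code_angle_borel p : sigma_gen baire_gen (code_angle p).
Proof.
  apply sigma_gen_ext with (fun y => forall n k, forall a b e,
    dist_le (fadd (lin_comb n a (code_seq y 0 k)) (lin_comb n b (code_seq y 1 k))) fzero e ->
    dist_le (lin_comb n a (code_seq y 0 k)) fzero
      ((e + (l1norm n a + l1norm n b) * (2 * halfpow k)) * (INR p + 1)
       + l1norm n a * (2 * halfpow k))); [|reflexivity].
  apply sigma_gen_all; intro n; apply sigma_gen_all; intro k.
  apply baire_borel_of_coords
    with (L := code_indices 0 (fun j => j) n k ++ code_indices 1 (fun j => j) n k).
  intros y y' H Hy a b e.
  assert (E0 : lin_comb n a (code_seq y 0 k) = lin_comb n a (code_seq y' 0 k))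
    by exact (lin_comb_code_seq_ext n a 0 (fun j => j) k y y'
                (fun m Hm => H m (in_or_app _ _ _ (or_introl Hm)))).
  assert (E1 : lin_comb n b (code_seq y 1 k) = lin_comb n b (code_seq y' 1 k))
    by exact (lin_comb_code_seq_ext n b 1 (fun j => j) k y y'
                (fun m Hm => H m (in_or_app _ _ _ (or_intror Hm)))).
  rewrite <- E0, <- E1; apply Hy.
Qed.

Lemma code_decomp_borel p : sigma_gen prod_gen (fun q => code_decomp p (fst q) (snd q)).
Proof.
  repeat apply sigma_gen_and.
  - apply prod_borel_snd, code_cauchy_borel.
  - apply code_near_borel.
  - apply (prod_borel_snd (fun y => code_indep y 0)), code_indep_borel.
  - apply (prod_borel_snd (fun y => code_indep y 1)), code_indep_borel.
  - apply prod_borel_snd, code_angle_borel.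
Qed.

Lemma code_limits y :
  code_cauchy y ->
  exists v : nat -> nat -> Cantor -> R,
    forall tag, code_approx y tag (v tag) /\ forall j, cont_cantor (v tag j).
Proof.
  intros Hcau.
  assert (Hlim : forall tj : nat * nat, exists g,
            (forall k, dist_le g (code_seq y (fst tj) k (snd tj)) (2 * 1 * halfpow k)) /\ cont_cantor g).
  { intros [tag j]; destruct (geometric_cauchy_limit (fun k => code_seq y tag k j) 1) as [g [Hg Hgc]].
    - intro k; rewrite Rmult_1_l; apply Hcau.
    - exists g; split; [exact Hg | apply Hgc; intro k; apply step_fun_cont]. }
  destruct (choice _ Hlim) as [v Hv].
  exists (fun tag j => v (tag, j)); intro tag; split.
  - intros j k; rewrite <- (Rmult_1_r 2) at 1; apply (proj1 (Hv (tag, j))).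
  - intro j; apply (proj2 (Hv (tag, j))).
Qed.

Lemma code_limit_in X y tag v :
  SB X -> code_near X y -> code_approx y tag v -> (forall j, cont_cantor (v j)) ->
  forall j, X (v j).
Proof.
  intros HX Hnear Hv Hvc j; apply (subspace_limit X HX _ 5); [apply Hvc|].
  intro k; destruct (Hnear tag j k) as [x [Hx [_ [r' [Hr' Hd]]]]].
  exists x; split; [exact Hx|].
  eapply dist_le_weaken; [eapply dist_le_trans; [apply Hv | exact Hd]|].
  pose proof (halfpow_pos k); lra.
Qed.

Lemma lin_indep_of_code_indep y tag v :
  code_approx y tag v -> code_indep y tag ->
  forall n, lin_indep n (fun i => v (block_index n i)).
Proof.
  intros Hv Hind n c Hc i Hi; destruct (Hind n) as [q Hq].
  assert (Hq1 : 0 < INR q + 1) by (pose proof (pos_INR q); lra).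
  assert (Hci : Rabs (c i) / (INR q + 1) <= 0).
  { apply le_of_halfpow with (4 * l1norm n c); intro k.
    assert (Happ : dist_le (lin_comb n c (fun i => code_seq y tag k (block_index n i))) fzero
                     (l1norm n c * (2 * halfpow k) + 0)).
    { eapply dist_le_trans; [apply dist_le_sym, lin_comb_code_approx, Hv|].
      intro t; unfold lin_comb, fzero; rewrite Hc, Rminus_0_r, Rabs_R0; lra. }
    specialize (Hq k c _ Happ i Hi); lra. }
  apply Rabs_eq_0, Rle_antisym; [|apply Rabs_pos].
  apply Rmult_le_reg_r with (/ (INR q + 1)); [apply Rinv_0_lt_compat; exact Hq1|].
  rewrite Rmult_0_l; exact Hci.
Qed.

Lemma angle_of_code_angle y p z w :
  code_approx y 0 z -> code_approx y 1 w -> code_angle p y ->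
  forall n a b e, dist_le (fadd (lin_comb n a z) (lin_comb n b w)) fzero e ->
    dist_le (lin_comb n a z) fzero (e * (INR p + 1)).
Proof.
  intros Hz Hw Hang n a b e Hd.
  pose proof (pos_INR p); pose proof (l1norm_nonneg n a); pose proof (l1norm_nonneg n b).
  apply dist_le_of_halfpow with (4 * (l1norm n a + l1norm n b) * (INR p + 1) + 4 * l1norm n a).
  intro k; pose proof (halfpow_pos k).
  assert (Hcode : dist_le (fadd (lin_comb n a (code_seq y 0 k)) (lin_comb n b (code_seq y 1 k))) fzero
                    (e + (l1norm n a + l1norm n b) * (2 * halfpow k))).
  { eapply dist_le_weaken; [eapply dist_le_trans; [apply dist_le_sym, dist_le_add | exact Hd]|].
    - apply (lin_comb_code_approx y 0 z n a (fun j => j) k Hz).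
    - apply (lin_comb_code_approx y 1 w n b (fun j => j) k Hw).
    - lra. }
  eapply dist_le_weaken.
  - eapply dist_le_trans;
      [apply (lin_comb_code_approx y 0 z n a (fun j => j) k Hz) | exact (Hang _ _ _ _ _ Hcode)].
  - nra.
Qed.

Lemma code_decomp_not_hered_indec p X y : SB X -> code_decomp p X y -> ~ hered_indec X.
Proof.
  intros HX (Hcau & Hnear & Hind0 & Hind1 & Hang).
  destruct (code_limits y Hcau) as [v Hv].
  destruct (Hv 0%nat) as [Hz Hzc]; destruct (Hv 1%nat) as [Hw Hwc].
  apply (not_hered_indec_of_blocks X (v 0%nat) (v 1%nat) (INR p + 1) HX).
  - pose proof (pos_INR p); lra.
  - apply (code_limit_in X y 0); assumption.
  - apply (code_limit_in X y 1); assumption.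
  - apply (lin_indep_of_code_indep y 0); assumption.
  - apply (lin_indep_of_code_indep y 1); assumption.
  - apply (angle_of_code_angle y p); assumption.
Qed.

Lemma code_exists (vec : nat -> nat -> Cantor -> R) :
  (forall tag j, cont_cantor (vec tag j)) ->
  exists y, forall tag j k, dist_le (vec tag j) (code_seq y tag k j) (halfpow (S k)).
Proof.
  intros Hc.
  assert (Hch : forall m, exists idx,
    let tj := Cantor.of_nat (fst (Cantor.of_nat m)) in
    dist_le (vec (fst tj) (snd tj)) (step_fun idx) (halfpow (S (snd (Cantor.of_nat m))))).
  { intro m; apply step_fun_dense; [apply Hc | apply halfpow_pos]. }
  destruct (choice _ Hch) as [y Hy]; exists y; intros tag j k.
  specialize (Hy (code_index tag j k)); unfold code_index in Hy; cbv zeta in Hy.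
  rewrite Cantor.cancel_of_to in Hy; cbn [fst snd] in Hy.
  rewrite Cantor.cancel_of_to in Hy; exact Hy.
Qed.

Lemma code_indep_of_approx y tag v :
  (forall j, cont_cantor (v j)) -> (forall n, lin_indep n (fun i => v (block_index n i))) ->
  code_approx y tag v -> code_indep y tag.
Proof.
  intros Hc Hli Hv n.
  destruct (lin_indep_lower_bound n (fun i => v (block_index n i)) (fun i _ => Hc _) (Hli n))
    as [m [Hm Hlb]].
  destruct (INR_archimed 1 (/ m) ltac:(lra)) as [q Hq]; rewrite Rmult_1_r in Hq.
  exists q; intros k c e He i Hi.
  assert (Hq1 : 0 < INR q + 1) by (pose proof (pos_INR q); lra).
  assert (Hle : / (INR q + 1) <= m).
  { apply Rmult_le_reg_l with (INR q + 1); [exact Hq1|]; rewrite Rinv_r by lra.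
    apply Rmult_le_reg_l with (/ m); [apply Rinv_0_lt_compat; exact Hm|].
    replace (/ m * ((INR q + 1) * m)) with (INR q + 1) by (field; lra); lra. }
  assert (Hsum : dist_le (lin_comb n c (fun i => v (block_index n i))) fzero
                   (l1norm n c * (2 * halfpow k) + e))
    by (eapply dist_le_trans; [apply lin_comb_code_approx, Hv | exact He]).
  specialize (Hlb c _ Hsum i Hi).
  unfold Rdiv; rewrite Rmult_comm; pose proof (Rabs_pos (c i)).
  assert (/ (INR q + 1) * Rabs (c i) <= m * Rabs (c i)) by (apply Rmult_le_compat_r; auto).
  lra.
Qed.

Lemma code_angle_of_approx y p (Z W : fset) K z w :
  closed_subspace Z -> closed_subspace W -> angle_bound Z W K -> 0 <= K -> K <= INR p + 1 ->
  (forall j, Z (z j)) -> (forall j, W (w j)) -> code_approx y 0 z -> code_approx y 1 w ->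
  code_angle p y.
Proof.
  intros HZ HW Hang HK0 HK Hz Hw Hzy Hwy n k a b e He.
  pose proof (halfpow_pos k); pose proof (l1norm_nonneg n a); pose proof (l1norm_nonneg n b).
  assert (He0 : 0 <= e) by exact (dist_le_nonneg _ _ _ He).
  set (E := e + (l1norm n a + l1norm n b) * (2 * halfpow k)).
  assert (Hsum : dist_le (fadd (lin_comb n a z) (lin_comb n b w)) fzero E).
  { eapply dist_le_weaken; [eapply dist_le_trans; [apply dist_le_add | exact He]|].
    - apply (lin_comb_code_approx y 0 z n a (fun j => j) k Hzy).
    - apply (lin_comb_code_approx y 1 w n b (fun j => j) k Hwy).
    - unfold E; lra. }
  assert (HZa := Hang _ _ _ (subspace_lin_comb Z n a z HZ (fun i _ => Hz i))
                            (subspace_lin_comb W n b w HW (fun i _ => Hw i)) Hsum).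
  eapply dist_le_weaken.
  - eapply dist_le_trans;
      [apply dist_le_sym, (lin_comb_code_approx y 0 z n a (fun j => j) k Hzy) | exact HZa].
  - assert (E * K <= E * (INR p + 1)) by (apply Rmult_le_compat_l; [unfold E; nra | exact HK]).
    lra.
Qed.

Lemma infinite_dim_blocks Z :
  closed_subspace Z -> infinite_dim Z ->
  exists v, (forall j, Z (v j)) /\ forall n, lin_indep n (fun i => v (block_index n i)).
Proof.
  intros HZ Hinf; destruct (choice _ Hinf) as [u Hu].
  set (v := fun j => let ni := Cantor.of_nat j in
                     if Nat.ltb (snd ni) (fst ni) then u (fst ni) (snd ni) else fzero).
  exists v; split.
  - intro j; unfold v; destruct (Nat.ltb_spec (snd (Cantor.of_nat j)) (fst (Cantor.of_nat j))).
    + apply Hu; assumption.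
    + apply subspace_zero, HZ.
  - intro n; apply (lin_indep_ext n (u n)); [|apply Hu].
    intros i Hi; unfold v, block_index; rewrite Cantor.cancel_of_to; simpl.
    apply Nat.ltb_lt in Hi; rewrite Hi; reflexivity.
Qed.

Lemma decomposable_code X Y :
  SB X -> closed_subspace Y -> (forall f, Y f -> X f) -> decomposable Y ->
  exists p y, code_decomp p X y.
Proof.
  intros HX HY HYX (Z & W & HZ & HW & HZi & HWi & HZY & HWY & HZW & Hdec).
  destruct (direct_sum_angle_bound Y Z W HY HZ HW HZY HWY HZW Hdec) as [K [HK0 Hang]].
  destruct (INR_archimed 1 K ltac:(lra)) as [p Hp]; rewrite Rmult_1_r in Hp.
  destruct (infinite_dim_blocks Z HZ HZi) as [z [Hz Hzli]].
  destruct (infinite_dim_blocks W HW HWi) as [w [Hw Hwli]].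
  set (vec := fun tag j => match tag with O => z j | _ => w j end).
  assert (HvecX : forall tag j, X (vec tag j))
    by (intros [|tag] j; simpl; apply HYX; [apply HZY | apply HWY]; auto).
  assert (Hvc : forall tag j, cont_cantor (vec tag j))
    by (intros; apply (subspace_cont X HX); auto).
  destruct (code_exists vec Hvc) as [y Hy].
  assert (Happ : forall tag, code_approx y tag (vec tag)).
  { intros tag j k; eapply dist_le_weaken; [apply Hy|].
    rewrite halfpow_S; pose proof (halfpow_pos k); lra. }
  exists p, y; split; [|split; [|split; [|split]]].
  - intros tag j k; eapply dist_le_weaken; [eapply dist_le_trans; [apply dist_le_sym, Hy | apply Hy]|].
    rewrite !halfpow_S; pose proof (halfpow_pos k); lra.
  - intros tag j k; exists (vec tag j); split; [apply HvecX|]; split; [apply Hvc|].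
    exists (halfpow (S k)); split; [rewrite halfpow_S; pose proof (halfpow_pos k); lra|].
    apply dist_le_sym, Hy.
  - apply (code_indep_of_approx y 0 z); [intro j; apply (Hvc 0%nat) | exact Hzli | apply (Happ 0%nat)].
  - apply (code_indep_of_approx y 1 w); [intro j; apply (Hvc 1%nat) | exact Hwli | apply (Happ 1%nat)].
  - apply (code_angle_of_approx y p Z W K z w HZ HW Hang HK0);
      [lra | auto | auto | apply (Happ 0%nat) | apply (Happ 1%nat)].
Qed.

Definition witness_set (q : fset * Baire) : Prop :=
  (exists N, ~ meets_indep_balls N (fst q)) \/ exists p, code_decomp p (fst q) (snd q).

Lemma witness_set_borel : sigma_gen prod_gen witness_set.
Proof.
  apply sigma_gen_or.
  - apply (prod_borel_fst (fun X => exists N, ~ meets_indep_balls N X)).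
    apply sg_cup; intro N; apply sg_compl, meets_indep_balls_borel.
  - apply sg_cup; intro p; apply code_decomp_borel.
Qed.

Lemma not_hered_indec_iff_witness X : SB X -> (~ hered_indec X <-> exists y, witness_set (X, y)).
Proof.
  intros HX; split.
  - intros Hn; destruct (classic (infinite_dim X)) as [Hinf|Hfin].
    + assert (Hdec : exists Y, closed_subspace Y /\ (forall f, Y f -> X f) /\ decomposable Y).
      { apply NNPP; intro Hno; apply Hn; split; [exact Hinf|].
        intros Y HY HYX HYd; apply Hno; exists Y; auto. }
      destruct Hdec as [Y [HY [HYX HYd]]].
      destruct (decomposable_code X Y HX HY HYX HYd) as [p [y Hy]].
      exists y; right; exists p; exact Hy.
    + exists (fun _ => O); left; apply NNPP; intro Hall; apply Hfin; intro N.
      apply (meets_indep_balls_iff N X HX); apply NNPP; intro HN; apply Hall; exists N; exact HN.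
  - intros [y [[N HN] | [p Hp]]] [Hinf Hhi].
    + apply HN, (meets_indep_balls_iff N X HX), Hinf.
    + exact (code_decomp_not_hered_indec p X y HX Hp (conj Hinf Hhi)).
Qed.

Theorem theorem5p10 : coanalytic_SB HI.
Proof.
  split; [intros X [HX _]; exact HX|].
  exists witness_set; split; [exact witness_set_borel|].
  intro X; split.
  - intros [HX HnHI]; split; [exact HX|].
    apply (not_hered_indec_iff_witness X HX); intro Hhi; apply HnHI; split; assumption.
  - intros [HX Hw]; split; [exact HX|].
    intros [_ Hhi]; exact (proj2 (not_hered_indec_iff_witness X HX) Hw Hhi).
Qed.
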